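(* The map $W:\mathcal{Q}_+/\mathrm{SL}_2(\mathbb{Z})\to \{L,R\}^*_{\mathrm{prim}}/{\sim}$ given by \[ [Q]\mapsto W(Q)=L^{c_1}R^{c_2}\cdots L^{c_{2\ell-1}}R^{c_{2\ell}}, \] where $(c_1,\dots,c_{2\ell})$ is the periodic part of the continued fraction expansion $w_Q=[a_1,\dots,a_{2k},\overline{c_1,\dots,c_{2\ell}}]$ described below, is well-defined. Moreover, its image consists of all classes in $\{L,R\}^*_{\mathrm{prim}}/{\sim}$ except the classes of the two words $L$ and $R$ of length one.
   Context: $\mathcal{Q}$ is the set of integral binary quadratic forms $Q(x,y)=ax^2+bxy+cy^2$, with right action of $\mathrm{SL}_2(\mathbb{Z})$ given by $(Q\circ\gamma)(x,y)=Q(\alpha x+\beta y,\gamma x+\delta y)$ for $\gamma=\begin{pmatrix}\alpha&\beta\\ \gamma&\delta\end{pmatrix}$; $\mathcal{Q}_+$ is the set of $Q\in\mathcal{Q}$ whose discriminant $D=b^2-4ac$ is positive and not a perfect square (then $a\neq 0$). For $Q\in\mathcal{Q}_+$, $w_Q=\frac{-b+\sqrt{D}}{2a}$. Every real quadratic irrational has an eventually periodic regular continued fraction $[a_1,a_2,\dots]$ ($a_1\in\mathbb{Z}$, $a_j\in\mathbb{Z}_{>0}$ for $j\ge2$); write $w_Q=[a_1,\dots,a_{2k},\overline{c_1,\dots,c_{2\ell}}]$ with a pre-periodic part of even length $2k$ (chosen arbitrarily among valid choices) and ''minimal even period'' $2\ell$: if the minimal period $(c_1,\dots,c_m)$ has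 $m$ even, $2\ell=m$; if $m$ is odd, the period is taken to be the doubled block $(c_1,\dots,c_m,c_1,\dots,c_m)$ and $2\ell=2m$. $\{L,R\}^*_{\mathrm{prim}}$ is the set of finite nonempty words over $\{L,R\}$ that are primitive (not a power $U^k$, $k\ge2$, of a shorter word), and $\sim$ is the equivalence relation of cyclic permutation; $L^c$ denotes $c$ consecutive copies of $L$. *)

From Stdlib Require Import Reals ZArith Arith List Lia.
Import ListNotations.

(** Integral binary quadratic forms Q(x,y) = a x^2 + b x y + c y^2. *)
Record form : Type := mkForm { fa : Z; fb : Z; fc : Z }.

Definition disc (Q : form) : Z := (fb Q * fb Q - 4 * fa Q * fc Q)%Z.

Definition in_Qplus (Q : form) : Prop :=
  (0 < disc Q)%Z /\ ~ (exists z : Z, (z * z)%Z = disc Q).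

(** Right action (Q o g)(x,y) = Q(al x + be y, ga x + de y). *)
Definition form_act (Q : form) (al be ga de : Z) : form :=
  mkForm (fa Q * al * al + fb Q * al * ga + fc Q * ga * ga)%Z
         (2 * fa Q * al * be + fb Q * (al * de + be * ga) + 2 * fc Q * ga * de)%Z
         (fa Q * be * be + fb Q * be * de + fc Q * de * de)%Z.

Definition SL2_equiv (Q Q' : form) : Prop :=
  exists al be ga de : Z, (al * de - be * ga)%Z = 1%Z /\ Q' = form_act Q al be ga de.

Definition wQ (Q : form) : R :=
  ((- IZR (fb Q) + sqrt (IZR (disc Q))) / (2 * IZR (fa Q)))%R.

(** Regular continued fraction algorithm: complete quotients and partial
    quotients (Int_part = floor).  cf_digit x n = a_{n+1}. *)
Fixpoint cf_rem (x : R) (n : nat) : R :=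
  match n with
  | O => x
  | S m => (/ (cf_rem x m - IZR (Int_part (cf_rem x m))))%R
  end.

Definition cf_digit (x : R) (n : nat) : Z := Int_part (cf_rem x n).

Definition periodic_from (d : nat -> Z) (N p : nat) : Prop :=
  (0 < p)%nat /\ forall n, (N <= n)%nat -> d (n + p)%nat = d n.

Definition min_period (d : nat -> Z) (p : nat) : Prop :=
  (exists N, periodic_from d N p) /\
  forall q, (exists N, periodic_from d N q) -> (p <= q)%nat.

(** A valid choice: pre-period of even length 2k, and c = (c_1,...,c_{2l})
    the minimal even period (doubled minimal period if that one is odd). *)
Definition cf_even_period (x : R) (k : nat) (c : list Z) : Prop :=
  exists m : nat,
    min_period (cf_digit x) m /\
    periodic_from (cf_digit x) (2 * k) m /\
    c = map (fun j => cf_digit x (2 * k + j)%nat)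
            (seq 0 (if Nat.odd m then 2 * m else m)).

Inductive LR : Type := L_ | R_.

(** L^{c_1} R^{c_2} ... L^{c_{2l-1}} R^{c_{2l}} *)
Definition word_of (c : list nat) : list LR :=
  concat (map (fun i => repeat (if Nat.odd i then R_ else L_) (nth i c 0%nat))
              (seq 0 (length c))).

Definition W_rel (Q : form) (w : list LR) : Prop :=
  exists (k : nat) (c : list Z),
    cf_even_period (wQ Q) k c /\ w = word_of (map Z.to_nat c).

Definition cyc_equiv (u v : list LR) : Prop :=
  exists i : nat, v = skipn i u ++ firstn i u.

Definition primitive_word (u : list LR) : Prop :=
  u <> [] /\ forall (U : list LR) (k : nat), (2 <= k)%nat -> u <> concat (repeat U k).

(* Reduction theory of indefinite forms: the forms attached to the complete
   quotients of [w_Q] are eventually reduced, reduced forms of a given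
   discriminant are finitely many, so the expansion is eventually periodic.
   The generators [x |-> x + 1] and [x |-> -1/x] of [SL_2(Z)] preserve the tail
   of an expansion up to an even shift of indices, so equivalent forms have
   even period blocks that are rotations of each other by an even amount, and
   their words are rotations of each other.  Run lengths are recovered from
   a word starting with [L] and ending with [R], so a proper power would give a
   shorter even period.  Conversely, a primitive word other than [L] and [R]
   has a rotation starting with [L] and ending with [R]; its run lengths [c]
   define the purely periodic number fixed by [t |-> [c; t]], a root of an
   integral form whose discriminant is not a square because the expansion of
   the root is infinite. *)

From Pilot Require Import Defs.
From Stdlib Require Import Reals ZArith Arith List.
Import ListNotations.
From Stdlib Require Import Lia Lra Classical.
(* [Reals] exports a [disc] of its own; this restores the discriminant of [Defs]. *)
Import Defs.

(** * Words *)

Definition letter (b : bool) : LR := if b then R_ else L_.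

Fixpoint alt_word (b : bool) (c : list nat) : list LR :=
  match c with
  | [] => []
  | x :: r => repeat (letter b) x ++ alt_word (negb b) r
  end.

Lemma word_of_offset (c : list nat) (o : nat) :
  concat (map (fun i => repeat (if Nat.odd (o + i) then R_ else L_) (nth i c 0%nat))
              (seq 0 (length c))) = alt_word (Nat.odd o) c.
Proof.
  revert o; induction c as [|x r IH]; intros o; [reflexivity|].
  cbn [length seq map concat]. rewrite <- seq_shift, map_map, Nat.add_0_r.
  cbn [alt_word]. f_equal.
  rewrite Nat.negb_odd, <- Nat.odd_succ, <- (IH (S o)).
  f_equal. apply map_ext. intros i. rewrite Nat.add_succ_r. reflexivity.
Qed.

Lemma word_ofE (c : list nat) : word_of c = alt_word false c.
Proof. exact (word_of_offset c 0). Qed.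

Lemma alt_word_app (u v : list nat) (b : bool) :
  alt_word b (u ++ v) =
  alt_word b u ++ alt_word (if Nat.even (length u) then b else negb b) v.
Proof.
  revert b; induction u as [|x u IH]; intros b; [reflexivity|].
  cbn [alt_word app length]. rewrite IH, app_assoc, Nat.even_succ, <- Nat.negb_even.
  destruct (Nat.even (length u)), b; reflexivity.
Qed.

Lemma alt_word_app_even (u v : list nat) (b : bool) : Nat.even (length u) = true ->
  alt_word b (u ++ v) = alt_word b u ++ alt_word b v.
Proof. intros Hu. rewrite alt_word_app, Hu. reflexivity. Qed.

Definition lpow {A : Type} (V : list A) (q : nat) : list A := concat (repeat V q).

Lemma lpow_succ_r {A : Type} (V : list A) (q : nat) : lpow V (S q) = lpow V q ++ V.
Proof.
  unfold lpow; induction q as [|q IH]; cbn [repeat concat] in *.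
  - rewrite app_nil_r. reflexivity.
  - rewrite <- app_assoc, <- IH. reflexivity.
Qed.

Lemma lpow_nil {A : Type} (q : nat) : lpow (@nil A) q = [].
Proof. unfold lpow; induction q; auto. Qed.

Lemma lpow_repeat {A : Type} (x : A) (n : nat) : repeat x n = lpow [x] n.
Proof. unfold lpow; induction n as [|n IH]; cbn; [reflexivity|]. rewrite IH. reflexivity. Qed.

Lemma map_lpow {A B : Type} (f : A -> B) (X : list A) (q : nat) :
  map f (lpow X q) = lpow (map f X) q.
Proof.
  unfold lpow; induction q as [|q IH]; cbn; [reflexivity|]. rewrite map_app, IH. reflexivity.
Qed.

Lemma alt_word_lpow (c : list nat) (q : nat) (b : bool) : Nat.even (length c) = true ->
  alt_word b (lpow c q) = lpow (alt_word b c) q.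
Proof.
  intros Hc. unfold lpow; induction q as [|q IH]; cbn; [reflexivity|].
  rewrite alt_word_app_even, IH by exact Hc. reflexivity.
Qed.

Lemma lpow_rotate1 {A : Type} (a : A) (V : list A) (q : nat) :
  a :: lpow (V ++ [a]) q ++ V = lpow (a :: V) (S q).
Proof.
  unfold lpow; induction q as [|q IH]; cbn [repeat concat] in *.
  - rewrite app_nil_r. reflexivity.
  - rewrite <- IH, <- !app_assoc. reflexivity.
Qed.

Lemma lpow_rotate {A : Type} (X Y V : list A) (q : nat) :
  Y ++ X = lpow V q -> exists V', X ++ Y = lpow V' q.
Proof.
  revert Y V; induction X as [|a X IH] using rev_ind; intros Y V E.
  { rewrite app_nil_r in E. eauto. }
  assert (Hne : lpow V q <> []).
  { rewrite <- E. intros H. apply app_eq_nil in H as [_ H]. apply app_eq_nil in H as [_ H].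
    discriminate. }
  destruct (exists_last (l := V)) as (V0 & b & ->).
  { intros ->. apply Hne, lpow_nil. }
  destruct q as [|q]; [contradiction|].
  rewrite lpow_succ_r, !app_assoc in E. apply app_inj_tail in E as [E <-].
  destruct (IH (a :: Y) (a :: V0)) as (V' & E').
  - rewrite <- lpow_rotate1, <- E. reflexivity.
  - exists V'. rewrite <- app_assoc. exact E'.
Qed.

Definition all_pos (c : list nat) : Prop := Forall (fun x => 1 <= x)%nat c.

Definition not_led_by (a : LR) (l : list LR) : Prop := forall t, l <> a :: t.

Definition not_ended_by (a : LR) (l : list LR) : Prop := forall t, l <> t ++ [a].

Lemma repeat_app_inj (a : LR) (x x' : nat) (l l' : list LR) :
  repeat a x ++ l = repeat a x' ++ l' -> not_led_by a l -> not_led_by a l' ->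
  x = x' /\ l = l'.
Proof.
  revert x'; induction x as [|x IH]; intros [|x'] E Hl Hl'; cbn in E.
  - auto.
  - destruct (Hl _ E).
  - destruct (Hl' _ (eq_sym E)).
  - injection E as E. destruct (IH x' E Hl Hl'). auto.
Qed.

Lemma alt_word_not_led_by (b : bool) (c : list nat) :
  all_pos c -> not_led_by (letter (negb b)) (alt_word b c).
Proof.
  intros Hc t E.
  destruct Hc as [|[|x] r Hx _]; [discriminate|lia|destruct b; cbn in E; discriminate].
Qed.

Lemma alt_word_inj (b : bool) (c c' : list nat) :
  all_pos c -> all_pos c' -> alt_word b c = alt_word b c' -> c = c'.
Proof.
  revert b c'; induction c as [|x r IH]; intros b [|x' r'] Hc Hc' E; [reflexivity| | |].
  - inversion Hc' as [|? ? Hx']. destruct x'; [lia|destruct b; discriminate].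
  - inversion Hc as [|? ? Hx]. destruct x; [lia|destruct b; discriminate].
  - inversion Hc as [|? ? Hx Hr]; inversion Hc' as [|? ? Hx' Hr']; subst.
    assert (N := alt_word_not_led_by (negb b) r Hr).
    assert (N' := alt_word_not_led_by (negb b) r' Hr').
    rewrite Bool.negb_involutive in N, N'.
    destruct (repeat_app_inj _ _ _ _ _ E N N') as [-> E'].
    f_equal. exact (IH _ _ Hr Hr' E').
Qed.

Lemma runs_decomp (a : LR) (v : list LR) :
  exists n v', v = repeat a n ++ v' /\ not_led_by a v'.
Proof.
  induction v as [|h t IH].
  - exists 0%nat, []. split; [reflexivity|intros t E; discriminate E].
  - destruct (IH) as (n & v' & -> & Hv').
    destruct h, a.
    2, 3: exists 0%nat; eexists; split; [reflexivity|intros t E; discriminate E].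
    all: exists (S n), v'; auto.
Qed.

Lemma repeat_LR_no_RL (x y : nat) (U t : list LR) :
  repeat L_ x ++ repeat R_ y <> U ++ R_ :: L_ :: t.
Proof.
  revert U; induction x as [|x IH]; intros U E.
  - assert (H : In L_ (repeat R_ y)).
    { cbn in E. rewrite E. apply in_or_app. right. right. left. reflexivity. }
    apply repeat_spec in H. discriminate.
  - destruct U as [|h U]; [discriminate|]. injection E as _ E. exact (IH U E).
Qed.

Lemma alt_word_split (c : list nat) (U V : list LR) :
  all_pos c -> Nat.even (length c) = true -> alt_word false c = U ++ V ->
  not_ended_by L_ U -> not_led_by R_ V ->
  exists c1 c2, c = c1 ++ c2 /\ Nat.even (length c1) = true /\
    alt_word false c1 = U /\ alt_word false c2 = V.
Proof.
  revert U; induction c as [c IH] using (induction_ltof1 _ (@length nat));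
    intros U Hc Ev E HU HV.
  destruct U as [|u U'].
  { exists [], c. auto. }
  destruct c as [|x [|y r]]; [discriminate E|discriminate Ev|].
  inversion Hc as [|? ? Hx Hyr]; inversion Hyr as [|? ? Hy Hr]; subst.
  cbn [alt_word negb letter] in E. rewrite app_assoc in E.
  apply app_eq_app in E as (l & [[E1 E2]|[E1 E2]]).
  - destruct l as [|h t].
    + exists [x; y], r. rewrite app_nil_r in E1. cbn. rewrite app_nil_r. auto.
    + destruct h; [|destruct (HV _ E2)].
      destruct (exists_last (l := u :: U')) as (U1 & [|] & EU); [discriminate| |].
      * destruct (HU _ EU).
      * rewrite EU, <- app_assoc in E1. destruct (repeat_LR_no_RL _ _ _ _ E1).
  - assert (Hl : not_ended_by L_ l).
    { intros t ->. apply (HU ((repeat L_ x ++ repeat R_ y) ++ t)). rewrite E1, app_assoc.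
      reflexivity. }
    destruct (IH r ltac:(unfold ltof; cbn; lia) l Hr Ev E2 Hl HV)
      as (c1 & c2 & -> & Ev1 & W1 & W2).
    exists (x :: y :: c1), c2. cbn. rewrite W1, E1, app_assoc. auto.
Qed.

Lemma alt_word_surj (v : list LR) : not_led_by R_ v -> not_ended_by L_ v ->
  exists c, all_pos c /\ Nat.even (length c) = true /\ alt_word false c = v.
Proof.
  induction v as [v IH] using (induction_ltof1 _ (@length LR)); intros Hs He.
  destruct v as [|h t].
  { exists []. repeat constructor. }
  destruct (runs_decomp L_ (h :: t)) as ([|a] & v2 & Ev & Hv2).
  { cbn in Ev. subst v2. destruct h; [destruct (Hv2 t)|destruct (Hs t)]; reflexivity. }
  destruct (runs_decomp R_ v2) as ([|b] & v3 & Ev2 & Hv3).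
  { cbn in Ev2. subst v2.
    destruct v3 as [|[] t3]; [|destruct (Hv2 t3 eq_refl)|destruct (Hv3 t3 eq_refl)].
    destruct (He (repeat L_ a)). rewrite Ev, app_nil_r, <- repeat_cons. reflexivity. }
  assert (Hv3e : not_ended_by L_ v3).
  { intros t3 ->. apply (He ((repeat L_ (S a) ++ repeat R_ (S b)) ++ t3)).
    rewrite Ev, Ev2, !app_assoc. reflexivity. }
  assert (Hlt : ltof _ (@length LR) v3 (h :: t)).
  { unfold ltof. rewrite Ev, Ev2, !length_app, !repeat_length. cbn. lia. }
  destruct (IH v3 Hlt Hv3 Hv3e) as (c & Hc & Ec & Wc).
  exists (S a :: S b :: c). repeat split.
  - constructor; [lia|constructor; [lia|exact Hc]].
  - exact Ec.
  - cbn [alt_word negb letter]. rewrite Wc, Ev, Ev2, app_assoc. reflexivity.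
Qed.

Lemma alt_word_nil (b : bool) (c : list nat) : all_pos c -> alt_word b c = [] -> c = [].
Proof. intros [|[|x] r Hx _] E; [reflexivity|lia|discriminate E]. Qed.

Lemma alt_word_not_ended_by (b : bool) (c : list nat) :
  all_pos c -> Nat.even (length c) = true -> not_ended_by (letter b) (alt_word b c).
Proof.
  intros Hc Ev t E. destruct (exists_last (l := c)) as (c0 & x & ->).
  { intros ->. destruct t; discriminate E. }
  apply Forall_app in Hc as [_ Hx]. inversion Hx as [|? ? Hx1]; subst.
  rewrite length_app, Nat.add_1_r, Nat.even_succ, <- Nat.negb_even in Ev.
  rewrite alt_word_app in E. destruct (Nat.even (length c0)); [discriminate Ev|].
  destruct x as [|x]; [lia|]. cbn [alt_word] in E.
  rewrite app_nil_r in E. cbn [repeat] in E. rewrite repeat_cons, app_assoc in E.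
  apply app_inj_tail in E as [_ E].
  destruct b; discriminate E.
Qed.

Lemma lpow_not_led_by (a : LR) (U : list LR) (q : nat) :
  not_led_by a U -> not_led_by a (lpow U q).
Proof.
  intros HU. unfold lpow; induction q as [|q IH]; cbn; intros t E; [discriminate E|].
  destruct U as [|h U]; [exact (IH t E)|]. injection E as -> _. exact (HU U eq_refl).
Qed.

(* Both [U ++ V] and [V ++ U] cut the word between runs, and the runs determine [c]. *)
Lemma alt_word_eq_lpow (c : list nat) (U : list LR) (q : nat) :
  all_pos c -> Nat.even (length c) = true -> c <> [] -> (2 <= q)%nat ->
  alt_word false c = lpow U q ->
  exists c1 c2, c1 <> [] /\ c2 <> [] /\ Nat.even (length c1) = true /\
    c = c1 ++ c2 /\ c = c2 ++ c1.
Proof.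
  intros Hc Ev Hne Hq E. destruct q as [|q]; [lia|].
  set (V := lpow U q).
  assert (EUV : alt_word false c = U ++ V) by exact E.
  assert (EVU : alt_word false c = V ++ U) by (rewrite E, lpow_succ_r; reflexivity).
  assert (Hs := alt_word_not_led_by false c Hc). assert (He := alt_word_not_ended_by false c Hc Ev).
  assert (HUs : not_led_by R_ U).
  { intros t EU. apply (Hs (t ++ V)). rewrite EUV, EU. reflexivity. }
  assert (HUe : not_ended_by L_ U).
  { intros t EU. apply (He (V ++ t)). rewrite EVU, EU, app_assoc. reflexivity. }
  assert (HVs : not_led_by R_ V) by exact (lpow_not_led_by _ _ _ HUs).
  assert (HVe : not_ended_by L_ V).
  { intros t EV. apply (He (U ++ t)). rewrite EUV, EV, app_assoc. reflexivity. }
  destruct (alt_word_split c U V Hc Ev EUV HUe HVs) as (c1 & c2 & E12 & Ev1 & W1 & W2).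
  destruct (alt_word_split c V U Hc Ev EVU HVe HUs) as (c3 & c4 & E34 & _ & W3 & W4).
  assert (P12 := Hc). rewrite E12 in P12. apply Forall_app in P12 as [P1 P2].
  assert (P34 := Hc). rewrite E34 in P34. apply Forall_app in P34 as [P3 P4].
  assert (c4 = c1) as -> by exact (alt_word_inj false c4 c1 P4 P1 (eq_trans W4 (eq_sym W1))).
  assert (c3 = c2) as -> by exact (alt_word_inj false c3 c2 P3 P2 (eq_trans W3 (eq_sym W2))).
  assert (HU : U <> []).
  { intros ->. apply Hne, (alt_word_nil false c Hc). rewrite E. apply lpow_nil. }
  exists c1, c2. repeat split; auto.
  - intros ->. apply HU. rewrite <- W1. reflexivity.
  - intros ->. apply HU. destruct q as [|q]; [lia|].
    apply (app_eq_nil U (lpow U q)). exact (eq_sym W2).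
Qed.

Lemma cyc_equiv_swap (X Y : list LR) : cyc_equiv (X ++ Y) (Y ++ X).
Proof.
  exists (length X). rewrite skipn_app, firstn_app, skipn_all, firstn_all, Nat.sub_diag.
  cbn. rewrite app_nil_r. reflexivity.
Qed.

Lemma primitive_repeat (x : LR) (n : nat) : primitive_word (repeat x n) -> n = 1%nat.
Proof.
  intros [Hne Hp]. destruct n as [|[|n]]; [destruct Hne; reflexivity|reflexivity|].
  destruct (Hp [x] (S (S n))); [lia|apply lpow_repeat].
Qed.

Lemma primitive_swap (X Y : list LR) (V : list LR) (q : nat) :
  primitive_word (X ++ Y) -> (2 <= q)%nat -> Y ++ X <> lpow V q.
Proof.
  intros [_ Hp] Hq E. destruct (lpow_rotate _ _ _ _ E) as (V' & E'). exact (Hp V' q Hq E').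
Qed.

Lemma RL_factor_or_sorted (u : list LR) :
  (exists A B, u = A ++ R_ :: L_ :: B) \/ exists a b, u = repeat L_ a ++ repeat R_ b.
Proof.
  induction u as [|[] u [(A & B & ->)|(a & b & ->)]].
  - right. exists 0%nat, 0%nat. reflexivity.
  - left. exists (L_ :: A), B. reflexivity.
  - right. exists (S a), b. reflexivity.
  - left. exists (R_ :: A), B. reflexivity.
  - destruct a as [|a]; [right; exists 0%nat, (S b)|left; exists [], (repeat L_ a ++ repeat R_ b)];
      reflexivity.
Qed.

Lemma primitive_rotate_LR (u : list LR) :
  primitive_word u -> ~ cyc_equiv u [L_] -> ~ cyc_equiv u [R_] ->
  exists A B, u = A ++ B /\ (exists t, B ++ A = L_ :: t) /\ not_ended_by L_ (B ++ A).
Proof.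
  intros Hu HL HR. destruct (RL_factor_or_sorted u) as [(A & B & ->)|(a & b & ->)].
  - exists (A ++ [R_]), (L_ :: B). rewrite <- app_assoc.
    split; [reflexivity|split; [eexists; reflexivity|]].
    intros t E. rewrite app_assoc in E. apply app_inj_tail in E as [_ E].
    discriminate E.
  - assert (Hab : a <> 0%nat /\ b <> 0%nat).
    { split; intros ->; [apply HR|apply HL]; cbn in Hu |- *; rewrite ?app_nil_r in Hu |- *;
        rewrite (primitive_repeat _ _ Hu); exists 0%nat; reflexivity. }
    destruct a as [|a], b as [|b]; try lia.
    exists [], (repeat L_ (S a) ++ repeat R_ (S b)). rewrite app_nil_r.
    split; [reflexivity|split; [eexists; reflexivity|]].
    intros t E. cbn [repeat] in E. rewrite (repeat_cons b R_), app_assoc in E.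
    apply app_inj_tail in E as [_ E]. discriminate E.
Qed.

(** * Periodic sequences *)

Definition even_period (m : nat) : nat := if Nat.odd m then 2 * m else m.

Definition period_block (d : nat -> Z) (k m : nat) : list Z :=
  map (fun j => d (2 * k + j)%nat) (seq 0 (even_period m)).

Lemma even_period_spec (m : nat) : exists h, even_period m = (2 * h)%nat.
Proof.
  unfold even_period. destruct (Nat.odd m) eqn:E; [eauto|].
  rewrite <- Nat.negb_even, Bool.negb_false_iff in E. apply Nat.even_spec in E as [h Hh]. eauto.
Qed.

Lemma even_even_period (m : nat) : Nat.even (even_period m) = true.
Proof. destruct (even_period_spec m) as [h ->]. apply Nat.even_spec. exists h. reflexivity. Qed.

Lemma even_period_ge (m : nat) : (m <= even_period m)%nat.
Proof. unfold even_period. destruct (Nat.odd m); lia. Qed.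

Lemma length_period_block (d : nat -> Z) (k m : nat) :
  length (period_block d k m) = even_period m.
Proof. unfold period_block. rewrite length_map, length_seq. reflexivity. Qed.

Lemma periodic_from_mul (d : nat -> Z) (N p q n : nat) :
  periodic_from d N p -> (N <= n)%nat -> d (n + q * p)%nat = d n.
Proof.
  intros [Hp H] Hn. induction q as [|q IH]; [rewrite Nat.add_0_r; reflexivity|].
  replace (n + S q * p)%nat with ((n + q * p) + p)%nat by lia. rewrite H by lia. exact IH.
Qed.

Lemma periodic_from_even_period (d : nat -> Z) (N m n : nat) :
  periodic_from d N m -> (N <= n)%nat -> d (n + even_period m)%nat = d n.
Proof.
  intros H Hn. unfold even_period. destruct (Nat.odd m).
  - exact (periodic_from_mul d N m 2 n H Hn).
  - rewrite <- (Nat.mul_1_l m) at 1. exact (periodic_from_mul d N m 1 n H Hn).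
Qed.

Lemma periodic_from_le (d : nat -> Z) (N N' p : nat) :
  periodic_from d N p -> (N <= N')%nat -> periodic_from d N' p.
Proof. intros [H1 H2] H. split; [exact H1|]. intros n Hn. apply H2. lia. Qed.

Lemma min_period_exists (d : nat -> Z) :
  (exists N p, periodic_from d N p) -> exists m, min_period d m.
Proof.
  intros (N & p & Hp). revert N Hp. induction p as [p IH] using lt_wf_ind. intros N Hp.
  destruct (classic (exists q, (q < p)%nat /\ exists N, periodic_from d N q))
    as [(q & Hq & N' & HN')|Hn].
  - exact (IH q Hq N' HN').
  - exists p. split; [eauto|]. intros q HQ. destruct (Nat.lt_ge_cases q p); [|assumption].
    exfalso. eauto.
Qed.

Lemma min_period_unique (d : nat -> Z) (m m' : nat) :
  min_period d m -> min_period d m' -> m = m'.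
Proof. intros [H1 H2] [H3 H4]. specialize (H2 m' H3). specialize (H4 m H1). lia. Qed.

Lemma periodic_from_shift (d e : nat -> Z) (i j N p : nat) :
  (forall n, d (i + n)%nat = e (j + n)%nat) -> periodic_from d N p -> periodic_from e (N + j) p.
Proof.
  intros Hs [Hp H]. split; [exact Hp|]. intros n Hn.
  replace (n + p)%nat with (j + (n - j + p))%nat by lia.
  replace n with (j + (n - j))%nat at 2 by lia. rewrite <- !Hs.
  replace (i + (n - j + p))%nat with ((i + (n - j)) + p)%nat by lia. apply H. lia.
Qed.

Lemma min_period_shift (d e : nat -> Z) (i j m : nat) :
  (forall n, d (i + n)%nat = e (j + n)%nat) -> min_period d m -> min_period e m.
Proof.
  intros Hs [(N & HN) H]. split.
  - exists (N + j)%nat. exact (periodic_from_shift d e i j N m Hs HN).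
  - intros q (N' & HN'). apply H. exists (N' + i)%nat.
    apply (periodic_from_shift e d j i); [intros n; symmetry; apply Hs|exact HN'].
Qed.

Definition periodic {A : Type} (f : nat -> A) (M : nat) : Prop := forall t, f (t + M)%nat = f t.

Lemma periodic_mul {A : Type} (f : nat -> A) (M : nat) : periodic f M ->
  forall q t, f (t + q * M)%nat = f t.
Proof.
  intros Hp q t. induction q as [|q IH]; [rewrite Nat.add_0_r; reflexivity|].
  replace (t + S q * M)%nat with ((t + q * M) + M)%nat by lia. rewrite Hp. exact IH.
Qed.

Lemma periodic_mod {A : Type} (f : nat -> A) (M t : nat) : (0 < M)%nat -> periodic f M ->
  f t = f (t mod M).
Proof.
  intros HM Hp. rewrite <- (periodic_mul f M Hp (t / M) (t mod M)). f_equal.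
  pose proof (Nat.div_mod_eq t M). lia.
Qed.

Lemma periodic_ext {A : Type} (f g : nat -> A) (M : nat) : (0 < M)%nat ->
  periodic f M -> periodic g M ->
  (forall t, (t < M)%nat -> f t = g t) -> forall t, f t = g t.
Proof.
  intros HM Hf Hg H t. rewrite (periodic_mod f M t), (periodic_mod g M t) by assumption.
  apply H, Nat.mod_upper_bound. lia.
Qed.

Lemma map_seq_shift {A : Type} (f : nat -> A) (s a n : nat) :
  map f (seq (s + a) n) = map (fun t => f (s + t)%nat) (seq a n).
Proof.
  revert a; induction n as [|n IH]; intros a; [reflexivity|].
  cbn. f_equal. rewrite <- IH, Nat.add_succ_r. reflexivity.
Qed.

Lemma map_seq_rotate {A : Type} (f : nat -> A) (M r : nat) : periodic f M -> (r <= M)%nat ->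
  map (fun t => f (r + t)%nat) (seq 0 M) = map f (seq r (M - r)) ++ map f (seq 0 r).
Proof.
  intros Hp Hr. rewrite <- map_seq_shift, Nat.add_0_r.
  replace M with ((M - r) + r)%nat at 1 by lia. rewrite seq_app, map_app. f_equal.
  replace (r + (M - r))%nat with (M + 0)%nat by lia. rewrite map_seq_shift.
  apply map_ext. intros t. rewrite Nat.add_comm. apply Hp.
Qed.

Lemma map_seq_periodic_lpow {A : Type} (d : nat -> A) (P q : nat) : periodic d P ->
  map d (seq 0 (q * P)) = lpow (map d (seq 0 P)) q.
Proof.
  intros Hp. induction q as [|q IH]; [reflexivity|].
  replace (S q * P)%nat with (P + q * P)%nat by lia. rewrite seq_app, map_app.
  unfold lpow in *. cbn. f_equal. rewrite <- IH.
  rewrite <- (Nat.add_0_r P) at 1. rewrite map_seq_shift.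
  apply map_ext. intros t. rewrite Nat.add_comm. apply Hp.
Qed.

Lemma period_block_periodic (d : nat -> Z) (k m : nat) : periodic_from d (2 * k) m ->
  periodic (fun t => d (2 * k + t)%nat) (even_period m).
Proof.
  intros Pd t. rewrite Nat.add_assoc. apply (periodic_from_even_period d (2 * k)); [exact Pd|lia].
Qed.

(* The offset [s] between the two blocks is even, hence so is its residue modulo
   the even period. *)
Lemma period_block_rotate (d e : nat -> Z) (k k' m m' i j : nat) :
  min_period d m -> periodic_from d (2 * k) m ->
  min_period e m' -> periodic_from e (2 * k') m' ->
  Nat.even i = Nat.even j -> (forall n, d (i + n)%nat = e (j + n)%nat) ->
  exists u v, Nat.even (length u) = true /\ Nat.even (length v) = true /\
    period_block d k m = u ++ v /\ period_block e k' m' = v ++ u.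
Proof.
  intros Hm Pd Hm' Pe Hij Hs.
  assert (m' = m) as -> by exact (min_period_unique _ _ _ Hm' (min_period_shift d e i j m Hs Hm)).
  set (M := even_period m). destruct (even_period_spec m) as [h Hh]. fold M in Hh.
  assert (HM : (0 < M)%nat) by (pose proof (even_period_ge m); destruct Pd; lia).
  set (f := fun t => d (2 * k + t)%nat). set (g := fun t => e (2 * k' + t)%nat).
  assert (fper : periodic f M) by exact (period_block_periodic d k m Pd).
  assert (gper : periodic g M) by exact (period_block_periodic e k' m Pe).
  set (L := (j + 2 * k)%nat).
  set (s := (i + 2 * k' + L * M - j - 2 * k)%nat).
  assert (Hg : forall t, g t = f (s + t)%nat).
  { intros t. rewrite <- (periodic_mul g M gper L t). unfold g, f.
    replace (2 * k' + (t + L * M))%nat with (j + (2 * k' + t + L * M - j))%nat by nia.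
    rewrite <- Hs. f_equal. unfold s. nia. }
  assert (Hs2 : exists a, s = (2 * a)%nat).
  { assert (Nat.even (i + j) = true) as [w Hw]%Nat.even_spec
      by (rewrite Nat.even_add, Hij; destruct (Nat.even j); reflexivity).
    exists (w + k' + L * h - j - k)%nat. unfold s. rewrite Hh. nia. }
  destruct Hs2 as [a Ha].
  set (r := (s mod M)%nat).
  assert (Hr : r = (2 * (a mod h))%nat)
    by (unfold r; rewrite Ha, Hh; apply Nat.Div0.mul_mod_distr_l).
  assert (Hrh : (a mod h < h)%nat) by (apply Nat.mod_upper_bound; lia).
  exists (map f (seq 0 r)), (map f (seq r (M - r))). rewrite !length_map, !length_seq.
  split; [apply Nat.even_spec; exists (a mod h)%nat; exact Hr|].
  split; [apply Nat.even_spec; exists (h - a mod h)%nat; lia|].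
  split.
  - unfold period_block. fold M.
    change (map f (seq 0 M) = map f (seq 0 r) ++ map f (seq r (M - r))).
    replace M with (r + (M - r))%nat at 1 by lia. rewrite seq_app, map_app. reflexivity.
  - unfold period_block. fold M.
    change (map g (seq 0 M) = map f (seq r (M - r)) ++ map f (seq 0 r)).
    rewrite <- (map_seq_rotate f M r fper) by lia. apply map_ext. intros t.
    rewrite Hg, (periodic_mod f M (s + t)), (periodic_mod f M (r + t)) by assumption.
    unfold r. rewrite Nat.Div0.add_mod_idemp_l. reflexivity.
Qed.

Lemma app_inj_length {A : Type} (a b c d : list A) :
  length a = length c -> a ++ b = c ++ d -> a = c /\ b = d.
Proof.
  revert c; induction a as [|x a IH]; intros [|y c] H E; try discriminate H; [auto|].
  injection E as -> E. destruct (IH c ltac:(cbn in H; lia) E) as [-> ->]. auto.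
Qed.

Lemma periodic_block_swap {A : Type} (g : nat -> A) (M : nat) (c1 c2 : list A) : (0 < M)%nat ->
  periodic g M -> map g (seq 0 M) = c1 ++ c2 -> c1 ++ c2 = c2 ++ c1 ->
  forall t, g (length c1 + t)%nat = g t.
Proof.
  intros HM Hp E Ecomm. set (r := length c1).
  assert (HL : (r + length c2)%nat = M).
  { unfold r. rewrite <- length_app, <- E, length_map, length_seq. reflexivity. }
  assert (E' := E). rewrite <- HL, seq_app, map_app in E'.
  assert (Hr : length (map g (seq 0 r)) = r) by (rewrite length_map, length_seq; reflexivity).
  destruct (app_inj_length _ _ _ _ Hr E') as [E1 E2].
  apply (periodic_ext (fun t => g (r + t)%nat) g M HM); [|exact Hp|].
  { intros t. rewrite Nat.add_assoc. apply Hp. }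
  intros t Ht. apply (ext_in_map (f := fun t => g (r + t)%nat) (g := g) (l := seq 0 M));
    [|apply in_seq; lia].
  rewrite (map_seq_rotate g M r Hp) by lia.
  replace (M - r)%nat with (length c2) by lia. fold r in E1, E2. rewrite Nat.add_0_l in E2.
  rewrite E2, E1, E.
  symmetry. exact Ecomm.
Qed.

(* Such a [P] lies strictly between [m] and [2 m] ([m] is then odd), so [P - m]
   would be a shorter period. *)
Lemma even_period_minimal (d : nat -> Z) (k m P : nat) :
  min_period d m -> periodic_from d (2 * k) m -> Nat.even P = true ->
  (0 < P < even_period m)%nat -> (forall t, d (2 * k + t + P)%nat = d (2 * k + t)%nat) -> False.
Proof.
  intros [_ Hmin] Pm HP HPm HT.
  assert (PP : periodic_from d (2 * k) P).
  { split; [lia|]. intros n Hn. replace n with (2 * k + (n - 2 * k))%nat by lia. apply HT. }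
  assert (H1 := Hmin P (ex_intro (fun N => periodic_from d N P) _ PP)).
  unfold even_period in HPm. destruct (Nat.odd m) eqn:Em; [|lia].
  assert (P <> m) by (intros ->; rewrite <- Nat.negb_odd, Em in HP; discriminate).
  assert (PQ : periodic_from d (2 * k) (P - m)).
  { split; [lia|]. intros n Hn. destruct Pm as [_ Pm], PP as [_ PP].
    rewrite <- (Pm (n + (P - m))%nat) by lia.
    replace (n + (P - m) + m)%nat with (n + P)%nat by lia. apply PP, Hn. }
  assert (H2 := Hmin _ (ex_intro (fun N => periodic_from d N (P - m)) _ PQ)). lia.
Qed.

Lemma period_block_swap_trivial (d : nat -> Z) (k m : nat) (c1 c2 : list nat) :
  min_period d m -> periodic_from d (2 * k) m -> (forall t, (0 <= d (2 * k + t)%nat)%Z) ->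
  map Z.to_nat (period_block d k m) = c1 ++ c2 -> c1 ++ c2 = c2 ++ c1 ->
  Nat.even (length c1) = true -> c1 = [] \/ c2 = [].
Proof.
  intros Hm Pm Hd E Ecomm Ev.
  destruct c1 as [|x1 c1]; [left; reflexivity|]. destruct c2 as [|x2 c2]; [right; reflexivity|].
  exfalso. set (g := fun t => Z.to_nat (d (2 * k + t)%nat)).
  assert (Hg : map g (seq 0 (even_period m)) = (x1 :: c1) ++ x2 :: c2)
    by (rewrite <- E; unfold period_block; rewrite map_map; reflexivity).
  assert (HL := f_equal (@length nat) Hg). rewrite length_map, length_seq, length_app in HL.
  cbn [length] in HL.
  assert (Hgp : periodic g (even_period m))
    by (intros t; unfold g; rewrite (period_block_periodic d k m Pm); reflexivity).
  assert (Hsw := periodic_block_swap g (even_period m) _ _ ltac:(lia) Hgp Hg Ecomm).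
  apply (even_period_minimal d k m (length (x1 :: c1)) Hm Pm Ev); [cbn [length]; lia|].
  intros t. rewrite <- Nat.add_assoc. apply Z2Nat.inj; [apply Hd|apply Hd|].
  rewrite (Nat.add_comm t). exact (Hsw t).
Qed.

Lemma min_period_of_periodic (d : nat -> Z) (M m : nat) : (0 < M)%nat ->
  periodic d M -> min_period d m ->
  periodic_from d 0 m /\ (M mod m = 0)%nat.
Proof.
  intros HM Hp [(N & PN) Hmin].
  assert (P0 : periodic_from d 0 m).
  { destruct PN as [Hm PN]. split; [exact Hm|]. intros n _.
    rewrite <- (periodic_mul d M Hp N (n + m)), <- (periodic_mul d M Hp N n).
    replace (n + m + N * M)%nat with ((n + N * M) + m)%nat by lia. apply PN. nia. }
  split; [exact P0|].
  assert (Hm1 : (0 < m)%nat) by apply P0.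
  destruct (Nat.eq_dec (M mod m) 0) as [E|E]; [exact E|exfalso].
  assert (Pr : periodic_from d 0 (M mod m)).
  { split; [lia|]. intros n _. pose proof (Nat.div_mod_eq M m).
    rewrite <- (Hp n). replace (n + M)%nat with ((n + M mod m) + (M / m) * m)%nat by lia.
    symmetry. apply (periodic_from_mul d 0 m); [exact P0|lia]. }
  assert (H := Hmin _ (ex_intro (fun N => periodic_from d N (M mod m)) _ Pr)).
  assert (M mod m < m)%nat by (apply Nat.mod_upper_bound; lia). lia.
Qed.

Lemma even_period_divides (m M : nat) : Nat.even M = true -> (M mod m = 0)%nat ->
  exists q, M = (q * even_period m)%nat.
Proof.
  intros HM Hd. destruct (Nat.eq_dec m 0) as [->|Hm0]; [exists 0%nat; cbn in Hd; lia|].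
  pose proof (Nat.div_mod_eq M m) as Edm. rewrite Hd, Nat.add_0_r in Edm.
  unfold even_period. destruct (Nat.odd m) eqn:Em.
  - rewrite Edm, Nat.even_mul, <- Nat.negb_odd, Em in HM. cbn in HM.
    apply Nat.even_spec in HM as [q Hq]. exists q. lia.
  - exists (M / m)%nat. lia.
Qed.

Lemma map_nth_seq {A : Type} (c : list A) (x0 : A) :
  map (fun j => nth j c x0) (seq 0 (length c)) = c.
Proof.
  induction c as [|a c IH]; [reflexivity|]. cbn. f_equal.
  rewrite <- seq_shift, map_map. exact IH.
Qed.

Lemma period_block_root (d : nat -> Z) (c : list Z) (m : nat) :
  c <> [] -> Nat.even (length c) = true -> periodic d (length c) ->
  (forall j, (j < length c)%nat -> d j = nth j c 0%Z) -> min_period d m ->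
  periodic_from d 0 m /\ exists q, c = lpow (period_block d 0 m) q.
Proof.
  intros Hc Ev Hp Hd Hm.
  assert (HM : (0 < length c)%nat) by (destruct c; [contradiction|cbn; lia]).
  destruct (min_period_of_periodic d _ m HM Hp Hm) as [P0 Hdiv].
  split; [exact P0|].
  destruct (even_period_divides m _ Ev Hdiv) as [q Hq]. exists q.
  unfold period_block. cbn [Nat.mul Nat.add].
  rewrite <- map_seq_periodic_lpow, <- Hq
    by (intros n; apply (periodic_from_even_period d 0); [exact P0|lia]).
  rewrite <- (map_nth_seq c 0%Z) at 1. apply map_ext_in. intros j Hj%in_seq. symmetry. apply Hd.
  lia.
Qed.

(** * Continued fractions *)

Local Open Scope R_scope.

Lemma Int_part_eq (r : R) (z : Z) : IZR z <= r < IZR z + 1 -> Int_part r = z.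
Proof. intros H. symmetry. apply Int_part_spec. lra. Qed.

Lemma Int_part_bounds (r : R) : (forall z, r <> IZR z) ->
  IZR (Int_part r) < r < IZR (Int_part r) + 1.
Proof.
  intros H. destruct (base_Int_part r) as [H1 H2].
  assert (IZR (Int_part r) <> r) by (intros E; exact (H _ (eq_sym E))).
  lra.
Qed.

Lemma Int_part_ge1 (r : R) : 1 <= r -> (1 <= Int_part r)%Z.
Proof.
  intros H. destruct (base_Int_part r) as [H1 H2].
  assert (0 < IZR (Int_part r)) as H0%lt_IZR by lra. lia.
Qed.

Lemma cf_rem_add (x : R) (i j : nat) : cf_rem x (i + j) = cf_rem (cf_rem x i) j.
Proof.
  induction j as [|j IH]; cbn.
  - rewrite Nat.add_0_r. reflexivity.
  - rewrite Nat.add_succ_r. cbn. rewrite IH. reflexivity.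
Qed.

Lemma cf_rem_add_int (x : R) (b : Z) : (forall z, x <> IZR z) ->
  cf_rem (x + IZR b) 1 = cf_rem x 1.
Proof.
  intros Hx. cbn. destruct (Int_part_bounds x Hx).
  rewrite (Int_part_eq (x + IZR b) (Int_part x + b)); [|rewrite plus_IZR; lra].
  rewrite plus_IZR. f_equal. ring.
Qed.

(* No complete quotient is an integer (past one, [cf_rem] would divide by [0]):
   [x] is irrational. *)
Definition cf_infinite (x : R) : Prop := forall n z, cf_rem x n <> IZR z.

Lemma cf_infinite_rem (x : R) (i : nat) : cf_infinite x -> cf_infinite (cf_rem x i).
Proof. intros H n z. rewrite <- cf_rem_add. apply H. Qed.

Lemma cf_rem_gt1 (x : R) (n : nat) : (forall z, cf_rem x n <> IZR z) -> 1 < cf_rem x (S n).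
Proof.
  intros H. cbn [cf_rem]. destruct (Int_part_bounds _ H).
  rewrite <- Rinv_1. apply Rinv_lt_contravar; lra.
Qed.

Lemma cf_digit_ge1 (x : R) (n : nat) : cf_infinite x -> (1 <= cf_digit x (S n))%Z.
Proof. intros H. apply Int_part_ge1. left. apply cf_rem_gt1, H. Qed.

(* The parity of the shift is recorded because only even shifts preserve the
   [L]/[R] colouring of the digits. *)
Definition cf_tail_rel (p : bool) (x y : R) : Prop :=
  exists i j, xorb (Nat.even i) (Nat.even j) = p /\ cf_rem x i = cf_rem y j.

Lemma cf_tail_rel_sym (p : bool) (x y : R) : cf_tail_rel p x y -> cf_tail_rel p y x.
Proof. intros (i & j & Hp & E). exists j, i. rewrite Bool.xorb_comm. auto. Qed.

Lemma cf_tail_rel_trans (p q : bool) (x y z : R) :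
  cf_tail_rel p x y -> cf_tail_rel q y z -> cf_tail_rel (xorb p q) x z.
Proof.
  intros (i & j & <- & E) (j' & l & <- & E').
  exists (i + j')%nat, (l + j)%nat. split.
  - rewrite !Nat.even_add.
    destruct (Nat.even i), (Nat.even j), (Nat.even j'), (Nat.even l); reflexivity.
  - rewrite !cf_rem_add, E, <- E', <- !cf_rem_add, Nat.add_comm. reflexivity.
Qed.

Lemma cf_tail_rel_sub_int (x : R) (b : Z) : (forall z, x <> IZR z) ->
  cf_tail_rel false x (x - IZR b).
Proof.
  intros Hx. exists 1%nat, 1%nat. split; [reflexivity|].
  rewrite <- (cf_rem_add_int x (- b)) by exact Hx. rewrite opp_IZR. reflexivity.
Qed.

Lemma cf_tail_rel_inv (x : R) : 0 < x -> x <> 1 -> cf_tail_rel true x (/ x).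
Proof.
  intros Hx H1. destruct (Rlt_or_le 1 x) as [Hgt|Hle].
  - exists 0%nat, 1%nat. split; [reflexivity|]. cbn.
    assert (0 < / x < 1)
      by (split; [apply Rinv_0_lt_compat|rewrite <- Rinv_1; apply Rinv_lt_contravar]; lra).
    rewrite (Int_part_eq (/ x) 0) by (cbn; lra). cbn. rewrite Rminus_0_r, Rinv_inv. reflexivity.
  - exists 1%nat, 0%nat. split; [reflexivity|]. cbn.
    rewrite (Int_part_eq x 0) by (cbn; lra). cbn. rewrite Rminus_0_r. reflexivity.
Qed.

(* The two cases are [1 + 1/([1; a1, ...] - 1) = [a1 + 1; ...]] and
   [1 + 1/([a; ...] - 1) = [1; a - 1, ...]] for [a >= 2]. *)
Lemma cf_tail_rel_one_plus_inv_pred (X : R) : 1 < X -> cf_infinite X ->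
  cf_tail_rel true (1 + / (X - 1)) X.
Proof.
  intros HX NX. assert (HX0 := NX 0%nat). cbn in HX0.
  destruct (Int_part_bounds X HX0) as [B1 B2].
  assert (Ha : (1 <= Int_part X)%Z) by (apply Int_part_ge1; lra).
  destruct (Z.eq_dec (Int_part X) 1) as [Ea|Ea].
  - exists 1%nat, 2%nat. split; [reflexivity|].
    assert (E1 : cf_rem X 1 = / (X - 1)) by (cbn; rewrite Ea; reflexivity).
    rewrite <- E1, Rplus_comm, (cf_rem_add_int _ 1) by apply NX.
    rewrite <- cf_rem_add. reflexivity.
  - exists 2%nat, 1%nat. split; [reflexivity|].
    assert (HX2 : 2 < X).
    { assert (IZR 2 <= IZR (Int_part X)) by (apply IZR_le; lia).
      destruct (Req_dec X 2) as [E|E]; [destruct (HX0 2%Z E)|lra]. }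
    assert (0 < / (X - 1) < 1).
    { split; [apply Rinv_0_lt_compat|rewrite <- Rinv_1; apply Rinv_lt_contravar]; lra. }
    assert (E1 : cf_rem (1 + / (X - 1)) 1 = X + IZR (-1)).
    { cbn. rewrite (Int_part_eq _ 1) by lra.
      replace (1 + / (X - 1) - IZR 1) with (/ (X - 1)) by (cbn; ring).
      rewrite Rinv_inv. cbn. ring. }
    change 2%nat with (1 + 1)%nat. rewrite cf_rem_add, E1, cf_rem_add_int by exact HX0.
    reflexivity.
Qed.

Lemma cf_rem_opp (y : R) : (forall z, y <> IZR z) ->
  cf_rem (- y) 1 = 1 + / (cf_rem y 1 - 1).
Proof.
  intros Hy. destruct (Int_part_bounds y Hy) as [B1 B2]. cbn.
  rewrite (Int_part_eq (- y) (- Int_part y - 1)) by (rewrite minus_IZR, opp_IZR; cbn; lra).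
  rewrite minus_IZR, opp_IZR. cbn.
  assert (0 < y - IZR (Int_part y) < 1) by lra.
  assert (/ (y - IZR (Int_part y)) - 1 <> 0).
  { assert (1 < / (y - IZR (Int_part y))) by (rewrite <- Rinv_1; apply Rinv_lt_contravar; lra).
    lra. }
  field. lra.
Qed.

Lemma cf_tail_rel_opp (y : R) : cf_infinite y -> cf_tail_rel true y (- y).
Proof.
  intros Ny. assert (Hy := Ny 0%nat). cbn in Hy.
  assert (H1 : 1 < cf_rem y 1) by (apply cf_rem_gt1, Ny).
  assert (Ry : cf_tail_rel true y (cf_rem y 1)) by (exists 1%nat, 0%nat; auto).
  assert (Rm : cf_tail_rel true (1 + / (cf_rem y 1 - 1)) (- y)).
  { exists 0%nat, 1%nat. split; [reflexivity|]. symmetry. exact (cf_rem_opp y Hy). }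
  assert (G := cf_tail_rel_one_plus_inv_pred _ H1 (cf_infinite_rem y 1 Ny)).
  exact (cf_tail_rel_trans _ _ _ _ _ (cf_tail_rel_trans _ _ _ _ _ Ry (cf_tail_rel_sym _ _ _ G)) Rm).
Qed.

Lemma cf_tail_rel_opp_inv (x : R) : x <> 0 -> cf_infinite x -> cf_infinite (- / x) ->
  cf_tail_rel false x (- / x).
Proof.
  assert (Hpos : forall x, 0 < x -> cf_infinite x -> cf_infinite (- / x) ->
            cf_tail_rel false x (- / x)).
  { intros y Hy Ny Ny'. assert (y <> 1) by exact (Ny 0%nat 1%Z).
    assert (Ho := cf_tail_rel_opp _ Ny'). rewrite Ropp_involutive in Ho.
    exact (cf_tail_rel_trans _ _ _ _ _ (cf_tail_rel_inv y Hy H) (cf_tail_rel_sym _ _ _ Ho)). }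
  intros Hx Nx Nx'. destruct (Rlt_or_le 0 x) as [H|H]; [exact (Hpos x H Nx Nx')|].
  assert (Hy : 0 < - / x) by (apply Ropp_0_gt_lt_contravar, Rinv_lt_0_compat; lra).
  assert (E : - / (- / x) = x) by (field; exact Hx).
  apply cf_tail_rel_sym. rewrite <- E at 2. apply Hpos; [exact Hy|exact Nx'|rewrite E; exact Nx].
Qed.

Fixpoint cf_eval (l : list Z) (t : R) : R :=
  match l with
  | [] => t
  | a :: r => IZR a + / cf_eval r t
  end.

Definition all_posZ (l : list Z) : Prop := Forall (fun a => (1 <= a)%Z) l.

Lemma cf_eval_pos (l : list Z) (t : R) : 0 < t -> all_posZ l -> 0 < cf_eval l t.
Proof.
  intros Ht Hl. induction Hl as [|a r Ha Hr IH]; cbn; [exact Ht|].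
  apply IZR_le in Ha. assert (0 < / cf_eval r t) by (apply Rinv_0_lt_compat; exact IH). lra.
Qed.

Lemma cf_eval_cons_gt1 (a : Z) (r : list Z) (t : R) :
  0 < t -> all_posZ (a :: r) -> 1 < cf_eval (a :: r) t.
Proof.
  intros Ht Hl. inversion Hl as [|? ? Ha Hr]; subst. cbn.
  assert (0 < / cf_eval r t) by (apply Rinv_0_lt_compat, cf_eval_pos; assumption).
  apply IZR_le in Ha. lra.
Qed.

Lemma cf_eval_cons_step (a : Z) (r : list Z) (t : R) : 1 < t -> all_posZ (a :: r) ->
  IZR a < cf_eval (a :: r) t < IZR a + 1 /\ cf_rem (cf_eval (a :: r) t) 1 = cf_eval r t.
Proof.
  intros Ht Hl. inversion Hl as [|? ? Ha Hr]; subst.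
  assert (Hgt : 1 < cf_eval r t) by (destruct r; [exact Ht|apply cf_eval_cons_gt1; [lra|exact Hr]]).
  assert (0 < / cf_eval r t < 1).
  { split; [apply Rinv_0_lt_compat|rewrite <- Rinv_1; apply Rinv_lt_contravar]; lra. }
  cbn. split; [lra|]. rewrite (Int_part_eq _ a) by lra.
  replace (IZR a + / cf_eval r t - IZR a) with (/ cf_eval r t) by ring. apply Rinv_inv.
Qed.

Lemma cf_rem_cf_eval (l : list Z) (t : R) : 1 < t -> all_posZ l ->
  (forall j, (j < length l)%nat ->
     IZR (nth j l 0%Z) < cf_rem (cf_eval l t) j < IZR (nth j l 0%Z) + 1) /\
  cf_rem (cf_eval l t) (length l) = t.
Proof.
  intros Ht Hl. induction l as [|a r IH].
  { split; [cbn; lia|reflexivity]. }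
  destruct (cf_eval_cons_step a r t Ht Hl) as [Ba E1].
  inversion Hl as [|? ? _ Hr]; subst. destruct (IH Hr) as [IH1 IH2].
  change (length (a :: r)) with (1 + length r)%nat. rewrite cf_rem_add, E1.
  split; [|exact IH2].
  intros [|j] Hj; [exact Ba|].
  change (S j) with (1 + j)%nat. rewrite cf_rem_add, E1. apply IH1. cbn in Hj. lia.
Qed.

(* Each step of the algorithm on [p'/q'] yields a fraction with a smaller
   positive denominator. *)
Lemma cf_infinite_irrational (x : R) : cf_infinite x ->
  forall p q, (0 < q)%Z -> x <> IZR p / IZR q.
Proof.
  intros Nx p q Hq Ex.
  assert (Cl : forall n, exists p' q', (0 < q')%Z /\ (q' + Z.of_nat n <= q)%Z /\
                          cf_rem x n = IZR p' / IZR q').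
  { induction n as [|n (p' & q' & H1 & H2 & H3)].
    - exists p, q. repeat split; auto. lia.
    - destruct (Int_part_bounds _ (Nx n)) as [F1 F2].
      set (a := Int_part (cf_rem x n)) in *.
      rewrite H3 in F1, F2.
      assert (Q' : 0 < IZR q') by (apply IZR_lt; exact H1).
      assert (K1 : IZR (a * q') < IZR p').
      { rewrite mult_IZR. apply (Rmult_lt_compat_r (IZR q')) in F1; [|exact Q'].
        field_simplify in F1; lra. }
      assert (K2 : IZR p' < IZR (a * q' + q')).
      { rewrite plus_IZR, mult_IZR. apply (Rmult_lt_compat_r (IZR q')) in F2; [|exact Q'].
        field_simplify in F2; lra. }
      apply lt_IZR in K1. apply lt_IZR in K2.
      exists q', (p' - a * q')%Z. repeat split; [lia|lia|].
      cbn [cf_rem]. fold a. rewrite H3, minus_IZR, mult_IZR.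
      assert (0 < IZR (p' - a * q')) by (apply IZR_lt; lia).
      rewrite minus_IZR, mult_IZR in H. field. split; lra. }
  destruct (Cl (Z.to_nat q)) as (p' & q' & H1 & H2 & _). lia.
Qed.

(** * Quadratic forms *)

Definition sqrt_disc (f : form) : R := sqrt (IZR (disc f)).

(* [froot f s] is a root of [f(x, 1)] whenever [s * s = disc f]. *)
Definition froot (f : form) (s : R) : R := (- IZR (fb f) + s) / (2 * IZR (fa f)).

Definition wQ_conj (f : form) : R := froot f (- sqrt_disc f).

Lemma IZR_disc (f : form) :
  IZR (disc f) = IZR (fb f) * IZR (fb f) - 4 * IZR (fa f) * IZR (fc f).
Proof. unfold disc. rewrite minus_IZR, !mult_IZR. reflexivity. Qed.

(* Stated in the shape of [froot (cf_step_form f a) s] once unfolded. *)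
Lemma inv_root_sub (A B C a s : R) : A <> 0 -> A * a * a + B * a + C <> 0 ->
  s * s = B * B - 4 * A * C ->
  / ((- B + s) / (2 * A) - a) = (- - (2 * A * a + B) + s) / (2 * - (A * a * a + B * a + C)).
Proof.
  intros HA HF Hs.
  set (K := B + 2 * A * a). set (F := A * a * a + B * a + C) in *.
  assert (P : (s - K) * (K + s) = -4 * A * F).
  { replace ((s - K) * (K + s)) with (s * s - K * K) by ring. rewrite Hs. unfold K, F. ring. }
  assert (N1 : s - K <> 0) by (intros E; rewrite E in P; nra).
  assert (N2 : K + s <> 0) by (intros E; rewrite E in P; nra).
  replace ((- B + s) / (2 * A) - a) with ((s - K) / (2 * A)) by (unfold K; field; exact HA).
  replace (- - (2 * A * a + B) + s) with (K + s) by (unfold K; ring).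
  rewrite <- (Rinv_inv ((K + s) / (2 * - F))). f_equal.
  field_simplify_eq; [rewrite <- P; ring|repeat split; assumption].
Qed.

Section Qplus.

Variable f : form.
Hypothesis Hf : in_Qplus f.

Lemma sqrt_disc_sq : sqrt_disc f * sqrt_disc f = IZR (disc f).
Proof. apply sqrt_sqrt. destruct Hf as [H%IZR_lt _]. lra. Qed.

Lemma sqrt_disc_pos : 0 < sqrt_disc f.
Proof. apply sqrt_lt_R0. destruct Hf as [H%IZR_lt _]. exact H. Qed.

Lemma sqrt_disc_not_int (z : Z) : sqrt_disc f <> IZR z.
Proof.
  intros E. destruct Hf as [_ H]. apply H. exists z.
  apply eq_IZR. rewrite mult_IZR, <- E. apply sqrt_disc_sq.
Qed.

Lemma fa_neq0 : fa f <> 0%Z.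
Proof. intros E. destruct Hf as [_ H]. apply H. exists (fb f). unfold disc. rewrite E. ring. Qed.

Lemma fc_neq0 : fc f <> 0%Z.
Proof. intros E. destruct Hf as [_ H]. apply H. exists (fb f). unfold disc. rewrite E. ring. Qed.

Lemma form_no_int_root (a : Z) : (fa f * a * a + fb f * a + fc f <> 0)%Z.
Proof.
  intros E. destruct Hf as [_ H]. apply H. exists (2 * fa f * a + fb f)%Z.
  unfold disc. replace (fc f) with (- (fa f * a * a + fb f * a))%Z by lia. ring.
Qed.

Lemma froot_not_int (s : R) (z : Z) : s * s = IZR (disc f) ->
  (forall z, s <> IZR z) -> froot f s <> IZR z.
Proof.
  intros Hs Hn E. apply (Hn (2 * fa f * z + fb f)%Z).
  assert (IZR (fa f) <> 0) by (apply not_0_IZR, fa_neq0).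
  rewrite plus_IZR, !mult_IZR, <- E. unfold froot. field. assumption.
Qed.

Lemma wQ_not_int (z : Z) : wQ f <> IZR z.
Proof. apply froot_not_int; [apply sqrt_disc_sq|apply sqrt_disc_not_int]. Qed.

Lemma wQ_conj_not_int (z : Z) : wQ_conj f <> IZR z.
Proof.
  apply froot_not_int.
  - rewrite <- sqrt_disc_sq. ring.
  - intros z' E. apply (sqrt_disc_not_int (- z')). rewrite opp_IZR, <- E. ring.
Qed.

Lemma wQ_sub_conj : wQ f - wQ_conj f = sqrt_disc f / IZR (fa f).
Proof.
  assert (IZR (fa f) <> 0) by (apply not_0_IZR, fa_neq0).
  unfold wQ_conj, froot. unfold wQ. fold (sqrt_disc f). field. assumption.
Qed.

Lemma wQ_mul_conj : wQ f * wQ_conj f = IZR (fc f) / IZR (fa f).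
Proof.
  assert (IZR (fa f) <> 0) by (apply not_0_IZR, fa_neq0).
  unfold wQ_conj, froot, wQ. fold (sqrt_disc f).
  replace ((- IZR (fb f) + sqrt_disc f) / (2 * IZR (fa f)) *
           ((- IZR (fb f) + - sqrt_disc f) / (2 * IZR (fa f))))
    with ((IZR (fb f) * IZR (fb f) - sqrt_disc f * sqrt_disc f) / (4 * IZR (fa f) * IZR (fa f)))
    by (field; assumption).
  rewrite sqrt_disc_sq, IZR_disc. field. assumption.
Qed.

End Qplus.

(* The form whose root [froot _ s] is [1 / (froot f s - a)]. *)
Definition cf_step_form (f : form) (a : Z) : form :=
  mkForm (- (fa f * a * a + fb f * a + fc f)) (- (2 * fa f * a + fb f)) (- fa f).

Lemma disc_cf_step_form (f : form) (a : Z) : disc (cf_step_form f a) = disc f.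
Proof. unfold disc, cf_step_form; cbn [fa fb fc]. ring. Qed.

Lemma in_Qplus_cf_step_form (f : form) (a : Z) : in_Qplus f -> in_Qplus (cf_step_form f a).
Proof. unfold in_Qplus. rewrite disc_cf_step_form. exact (fun H => H). Qed.

Lemma froot_cf_step_form (f : form) (a : Z) (s : R) : in_Qplus f -> s * s = IZR (disc f) ->
  / (froot f s - IZR a) = froot (cf_step_form f a) s.
Proof.
  intros Hf Hs. unfold froot, cf_step_form; cbn [fa fb fc].
  rewrite !opp_IZR, !plus_IZR, !mult_IZR. apply inv_root_sub.
  - apply not_0_IZR, fa_neq0, Hf.
  - intros E. apply (form_no_int_root f Hf a), eq_IZR. rewrite !plus_IZR, !mult_IZR. exact E.
  - rewrite Hs, IZR_disc. ring.
Qed.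

Lemma wQ_cf_step_form (f : form) (a : Z) : in_Qplus f ->
  / (wQ f - IZR a) = wQ (cf_step_form f a).
Proof.
  intros Hf. unfold wQ at 2. rewrite disc_cf_step_form.
  apply froot_cf_step_form; [exact Hf|apply sqrt_disc_sq, Hf].
Qed.

Lemma wQ_conj_cf_step_form (f : form) (a : Z) : in_Qplus f ->
  / (wQ_conj f - IZR a) = wQ_conj (cf_step_form f a).
Proof.
  intros Hf. unfold wQ_conj, sqrt_disc at 2. rewrite disc_cf_step_form. fold (sqrt_disc f).
  apply froot_cf_step_form; [exact Hf|]. rewrite <- (sqrt_disc_sq f Hf). ring.
Qed.

Fixpoint cf_form (f : form) (n : nat) : form :=
  match n with
  | O => f
  | S n => cf_step_form (cf_form f n) (Int_part (wQ (cf_form f n)))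
  end.

Lemma in_Qplus_cf_form (f : form) (n : nat) : in_Qplus f -> in_Qplus (cf_form f n).
Proof. intros Hf. induction n; cbn; [exact Hf|apply in_Qplus_cf_step_form; assumption]. Qed.

Lemma disc_cf_form (f : form) (n : nat) : disc (cf_form f n) = disc f.
Proof. induction n; cbn; [reflexivity|rewrite disc_cf_step_form; assumption]. Qed.

Lemma cf_rem_wQ (f : form) (n : nat) : in_Qplus f -> cf_rem (wQ f) n = wQ (cf_form f n).
Proof.
  intros Hf. induction n as [|n IH]; [reflexivity|]. cbn [cf_rem cf_form].
  rewrite IH. apply wQ_cf_step_form, in_Qplus_cf_form, Hf.
Qed.

Lemma cf_infinite_wQ (f : form) : in_Qplus f -> cf_infinite (wQ f).
Proof. intros Hf n z. rewrite cf_rem_wQ by exact Hf. apply wQ_not_int, in_Qplus_cf_form, Hf. Qed.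

Lemma Rabs_sub_lt_Rabs_inv_sub (u v : R) : 0 < u < 1 -> 0 < v < 1 -> u <> v ->
  Rabs (u - v) < Rabs (/ u - / v).
Proof.
  intros Hu Hv Huv.
  assert (Hd : 0 < Rabs (u - v)) by (apply Rabs_pos_lt; lra).
  assert (Huv1 : 0 < u * v < 1) by (split; [apply Rmult_lt_0_compat|]; nra).
  replace (/ u - / v) with ((u - v) * / - (u * v)) by (field; lra).
  rewrite Rabs_mult, Rabs_inv, Rabs_Ropp, (Rabs_right (u * v)) by lra.
  assert (1 < / (u * v)) by (rewrite <- Rinv_1; apply Rinv_lt_contravar; lra).
  nra.
Qed.

Lemma nat_no_infinite_descent (h : nat -> nat) :
  ~ (forall n, (1 <= n)%nat -> (h (S n) < h n)%nat).
Proof.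
  intros H. assert (Hk : forall k, (h (1 + k) + k <= h 1)%nat).
  { induction k as [|k IH]; [cbn; lia|]. specialize (H (1 + k)%nat ltac:(lia)).
    replace (1 + S k)%nat with (S (1 + k)) by lia. lia. }
  specialize (Hk (S (h 1%nat))). lia.
Qed.

Section Reduction.

Variable f : form.
Hypothesis Hf : in_Qplus f.

Let x n := wQ (cf_form f n).
Let y n := wQ_conj (cf_form f n).
Let a n := Int_part (x n).
Let Hfn n : in_Qplus (cf_form f n) := in_Qplus_cf_form f n Hf.

Lemma cf_form_wQ_gt1 (n : nat) : (1 <= n)%nat -> 1 < x n.
Proof.
  destruct n as [|n]; [lia|]. intros _. unfold x. rewrite <- cf_rem_wQ by exact Hf.
  apply cf_rem_gt1, cf_infinite_wQ, Hf.
Qed.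

Lemma cf_form_digit_ge1 (n : nat) : (1 <= n)%nat -> (1 <= a n)%Z.
Proof. intros Hn. apply Int_part_ge1. left. apply cf_form_wQ_gt1, Hn. Qed.

Lemma cf_form_conj_succ (n : nat) : y (S n) = / (y n - IZR (a n)).
Proof. unfold y, a, x. cbn [cf_form]. rewrite wQ_conj_cf_step_form; [reflexivity|apply Hfn]. Qed.

Lemma cf_form_wQ_succ (n : nat) : x (S n) = / (x n - IZR (a n)).
Proof. unfold a, x. cbn [cf_form]. rewrite wQ_cf_step_form; [reflexivity|apply Hfn]. Qed.

Lemma cf_form_wQ_sub_conj (n : nat) : x n - y n = sqrt_disc f / IZR (fa (cf_form f n)).
Proof.
  unfold x, y, sqrt_disc. rewrite wQ_sub_conj, <- (disc_cf_form f n) by apply Hfn. reflexivity.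
Qed.

(* While the conjugates stay positive, [x n - y n] grows, so [|fa|] decreases. *)
Lemma cf_form_fa_decr (n : nat) : (1 <= n)%nat -> 0 < y (S n) -> 0 < y (S (S n)) ->
  (Z.abs (fa (cf_form f (S n))) < Z.abs (fa (cf_form f n)))%Z.
Proof.
  intros Hn Hy1 Hy2.
  destruct (Int_part_bounds (x n) (wQ_not_int _ (Hfn n))) as [U1 U2]. fold (a n) in U1, U2.
  set (u := x n - IZR (a n)). set (v := y n - IZR (a n)).
  assert (Hv0 : 0 < v).
  { rewrite cf_form_conj_succ in Hy1. fold v in Hy1.
    apply Rinv_0_lt_compat in Hy1. rewrite Rinv_inv in Hy1. exact Hy1. }
  assert (Hv1 : v < 1).
  { rewrite cf_form_conj_succ in Hy2. apply Rinv_0_lt_compat in Hy2. rewrite Rinv_inv in Hy2.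
    assert (Ha := cf_form_digit_ge1 (S n) ltac:(lia)). apply IZR_le in Ha.
    rewrite cf_form_conj_succ in Hy2. fold v in Hy2.
    destruct (Rlt_or_le v 1) as [H|H]; [exact H|].
    assert (/ v <= 1) by (rewrite <- Rinv_1; apply Rinv_le_contravar; lra). lra. }
  assert (Huv : u <> v).
  { intros E. assert (Hd := cf_form_wQ_sub_conj n).
    replace (x n - y n) with (u - v) in Hd by (unfold u, v; ring). rewrite E, Rminus_diag in Hd.
    symmetry in Hd. apply Rmult_integral in Hd as [Hd|Hd];
      [exact (Rgt_not_eq _ _ (sqrt_disc_pos f Hf) Hd)
      |exact (Rinv_neq_0_compat _ (not_0_IZR _ (fa_neq0 _ (Hfn n))) Hd)]. }
  assert (K := Rabs_sub_lt_Rabs_inv_sub u v ltac:(unfold u; lra) ltac:(lra) Huv).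
  replace (u - v) with (x n - y n) in K by (unfold u, v; ring).
  unfold u, v in K. rewrite <- cf_form_wQ_succ, <- cf_form_conj_succ, !cf_form_wQ_sub_conj in K.
  unfold Rdiv in K. rewrite !Rabs_mult, !Rabs_inv, <- !abs_IZR in K.
  assert (Hs := sqrt_disc_pos f Hf). rewrite Rabs_right in K by lra.
  apply Rmult_lt_reg_l in K; [|exact Hs].
  assert (P : forall m, 0 < IZR (Z.abs (fa (cf_form f m)))).
  { intros m. apply IZR_lt. assert (fa (cf_form f m) <> 0%Z) by apply fa_neq0, Hfn. lia. }
  apply Rinv_lt_contravar in K; [|apply Rmult_lt_0_compat; apply Rinv_0_lt_compat, P].
  rewrite !Rinv_inv in K. apply lt_IZR, K.
Qed.

Lemma cf_form_conj_neg : exists n0, (1 <= n0)%nat /\ y n0 < 0.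
Proof.
  apply NNPP. intros Hc.
  assert (Hp : forall n, (1 <= n)%nat -> 0 < y n).
  { intros n Hn. destruct (Rtotal_order 0 (y n)) as [H|[H|H]]; [exact H| |];
      exfalso; [exact (wQ_conj_not_int _ (Hfn n) 0 (eq_sym H))
               |exact (Hc (ex_intro _ n (conj Hn H)))]. }
  apply (nat_no_infinite_descent (fun n => Z.abs_nat (fa (cf_form f n)))).
  intros n Hn. pose proof (cf_form_fa_decr n Hn (Hp (S n) ltac:(lia)) (Hp (S (S n)) ltac:(lia))).
  lia.
Qed.

Lemma cf_form_eventually_reduced :
  exists N, forall n, (N <= n)%nat -> (fa (cf_form f n) * fc (cf_form f n) < 0)%Z.
Proof.
  destruct cf_form_conj_neg as (n0 & Hn0 & Hy0).
  assert (Hneg : forall k, y (n0 + k)%nat < 0).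
  { induction k as [|k IH]; [rewrite Nat.add_0_r; exact Hy0|].
    rewrite Nat.add_succ_r, cf_form_conj_succ. apply Rinv_lt_0_compat.
    assert (H := cf_form_digit_ge1 (n0 + k) ltac:(lia)). apply IZR_le in H. lra. }
  exists n0. intros n Hn. replace n with (n0 + (n - n0))%nat by lia.
  set (m := (n0 + (n - n0))%nat).
  assert (Hy := Hneg (n - n0)%nat). fold m in Hy.
  assert (Hx := cf_form_wQ_gt1 m ltac:(unfold m; lia)).
  assert (Hxy : x m * y m < 0) by nra.
  unfold x, y in Hxy. rewrite wQ_mul_conj in Hxy by apply Hfn.
  assert (A0 : IZR (fa (cf_form f m)) <> 0) by apply not_0_IZR, fa_neq0, Hfn.
  apply lt_IZR. rewrite mult_IZR.
  replace (IZR (fa (cf_form f m)) * IZR (fc (cf_form f m))) with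
    (IZR (fc (cf_form f m)) / IZR (fa (cf_form f m)) *
     (IZR (fa (cf_form f m)) * IZR (fa (cf_form f m))))
    by (field; exact A0).
  assert (0 < IZR (fa (cf_form f m)) * IZR (fa (cf_form f m))).
  { destruct (Rtotal_order 0 (IZR (fa (cf_form f m)))) as [H|[H|H]]; nra. }
  nra.
Qed.

End Reduction.

Lemma pigeonhole {T : Type} (g : nat -> T) (K : nat) (box : list T) :
  (length box <= K)%nat -> (forall i, (i <= K)%nat -> In (g i) box) ->
  exists i j, (i < j <= K)%nat /\ g i = g j.
Proof.
  intros Hl Hin. apply NNPP. intros Hc.
  assert (ND : NoDup (map g (seq 0 (S K)))).
  { apply NoDup_map_NoDup_ForallPairs; [|apply seq_NoDup].
    intros i j Hi%in_seq Hj%in_seq E.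
    destruct (Nat.lt_trichotomy i j) as [H|[H|H]]; [| exact H |]; exfalso; apply Hc.
    - exists i, j. split; [lia|exact E].
    - exists j, i. split; [lia|exact (eq_sym E)]. }
  assert (Hincl : incl (map g (seq 0 (S K))) box).
  { intros z (i & <- & Hi%in_seq)%in_map_iff. apply Hin. lia. }
  pose proof (NoDup_incl_length ND Hincl). rewrite length_map, length_seq in H. lia.
Qed.

Definition Z_range (D : Z) : list Z :=
  map (fun i => (Z.of_nat i - D)%Z) (seq 0 (Z.to_nat (2 * D + 1))).

Definition form_box (D : Z) : list form :=
  map (fun p => mkForm (fst p) (fst (snd p)) (snd (snd p)))
      (list_prod (Z_range D) (list_prod (Z_range D) (Z_range D))).

Lemma in_Z_range (D a : Z) : (- D <= a <= D)%Z -> In a (Z_range D).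
Proof.
  intros H. apply in_map_iff. exists (Z.to_nat (a + D)). split; [lia|]. apply in_seq. lia.
Qed.

Lemma in_form_box (D : Z) (f : form) :
  (Z.abs (fa f) <= D)%Z -> (Z.abs (fb f) <= D)%Z -> (Z.abs (fc f) <= D)%Z -> In f (form_box D).
Proof.
  destruct f as [a b c]; cbn. intros Ha Hb Hc. apply in_map_iff. exists (a, (b, c)).
  split; [reflexivity|]. apply in_prod; [apply in_Z_range; lia|].
  apply in_prod; apply in_Z_range; lia.
Qed.

Lemma reduced_form_bounded (A B C : Z) : (A * C < 0)%Z ->
  (Z.abs A <= B * B - 4 * A * C /\ Z.abs B <= B * B - 4 * A * C /\
   Z.abs C <= B * B - 4 * A * C)%Z.
Proof.
  intros H.
  assert (E : (Z.abs A * Z.abs C = - (A * C))%Z) by (rewrite <- Z.abs_mul; lia).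
  assert (HA : (1 <= Z.abs A)%Z) by (destruct (Z.eq_dec A 0); [subst; lia|lia]).
  assert (HC : (1 <= Z.abs C)%Z) by (destruct (Z.eq_dec C 0); [subst; lia|lia]).
  assert (HB : (Z.abs B <= B * B)%Z).
  { rewrite <- (Z.abs_square B). destruct (Z.eq_dec B 0) as [->|Hb]; [cbn; lia|nia]. }
  nia.
Qed.

(* Lagrange: reduced forms of a fixed discriminant have bounded coefficients,
   so two of the [cf_form f n] coincide. *)
Lemma cf_digit_wQ_eventually_periodic (f : form) : in_Qplus f ->
  exists N p, periodic_from (cf_digit (wQ f)) N p.
Proof.
  intros Hf. destruct (cf_form_eventually_reduced f Hf) as [N HN].
  destruct (pigeonhole (fun i => cf_form f (N + i)) _ (form_box (disc f)) (le_n _))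
    as (i & j & Hij & E).
  { intros i _.
    destruct (reduced_form_bounded _ (fb (cf_form f (N + i))) _ (HN (N + i)%nat ltac:(lia)))
      as (B1 & B2 & B3).
    fold (disc (cf_form f (N + i))) in B1, B2, B3. rewrite disc_cf_form in B1, B2, B3.
    apply in_form_box; assumption. }
  exists (N + i)%nat, (j - i)%nat. split; [lia|].
  assert (P : forall t, cf_form f (N + i + t + (j - i)) = cf_form f (N + i + t)).
  { induction t as [|t IH].
    - rewrite Nat.add_0_r. replace (N + i + (j - i))%nat with (N + j)%nat by lia. exact (eq_sym E).
    - replace (N + i + S t + (j - i))%nat with (S (N + i + t + (j - i))) by lia.
      replace (N + i + S t)%nat with (S (N + i + t)) by lia. cbn [cf_form]. rewrite IH.
      reflexivity. }
  intros n Hn. unfold cf_digit. rewrite !cf_rem_wQ by exact Hf.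
  replace n with (N + i + (n - (N + i)))%nat by lia. rewrite P. reflexivity.
Qed.

Lemma form_act_comp (Q : form) (a b c d a' b' c' d' : Z) :
  form_act (form_act Q a b c d) a' b' c' d' =
  form_act Q (a * a' + b * c') (a * b' + b * d') (c * a' + d * c') (c * b' + d * d').
Proof. unfold form_act; cbn [fa fb fc]. f_equal; ring. Qed.

Lemma disc_form_act (Q : form) (a b c d : Z) :
  disc (form_act Q a b c d) = ((a * d - b * c) * (a * d - b * c) * disc Q)%Z.
Proof. unfold disc, form_act; cbn [fa fb fc]. ring. Qed.

Lemma in_Qplus_form_act (Q : form) (a b c d : Z) : (a * d - b * c = 1)%Z ->
  in_Qplus Q -> in_Qplus (form_act Q a b c d).
Proof. intros H. unfold in_Qplus. rewrite disc_form_act, H, !Z.mul_1_l. exact (fun HQ => HQ). Qed.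

Lemma wQ_form_act_translate (Q : form) (b : Z) : in_Qplus Q ->
  wQ (form_act Q 1 b 0 1) = wQ Q - IZR b.
Proof.
  intros HQ. assert (IZR (fa Q) <> 0) by apply not_0_IZR, fa_neq0, HQ.
  unfold wQ. rewrite disc_form_act, Z.mul_0_r, Z.sub_0_r, !Z.mul_1_l.
  unfold form_act; cbn [fa fb fc].
  replace (1 * 1 + b * 0)%Z with 1%Z by ring. rewrite !plus_IZR, !mult_IZR. field. assumption.
Qed.

Lemma wQ_form_act_S (Q : form) : in_Qplus Q -> wQ (form_act Q 0 1 (-1) 0) = - / wQ Q.
Proof.
  intros HQ. assert (A : IZR (fa Q) <> 0) by apply not_0_IZR, fa_neq0, HQ.
  assert (C : IZR (fc Q) <> 0) by apply not_0_IZR, fc_neq0, HQ.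
  assert (S1 : - IZR (fb Q) + sqrt_disc Q <> 0).
  { intros E. apply (sqrt_disc_not_int Q HQ (fb Q)). lra. }
  assert (Hs := sqrt_disc_sq Q HQ). rewrite IZR_disc in Hs.
  unfold wQ. rewrite disc_form_act. fold (sqrt_disc Q).
  replace ((0 * 0 - 1 * -1) * (0 * 0 - 1 * -1) * disc Q)%Z with (disc Q) by ring.
  fold (sqrt_disc Q). unfold form_act; cbn [fa fb fc].
  rewrite !plus_IZR, !mult_IZR. cbn.
  field_simplify_eq; [|repeat split; assumption].
  replace (sqrt_disc Q ^ 2) with (sqrt_disc Q * sqrt_disc Q) by ring. rewrite Hs. ring.
Qed.

(* Euclid's algorithm on the lower-left entry writes every element of
   [SL_2(Z)] as a word in [x |-> x + 1] and [x |-> -1/x]. *)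
Lemma cf_tail_rel_wQ_form_act (Q : form) (a b c d : Z) : in_Qplus Q ->
  (a * d - b * c = 1)%Z -> cf_tail_rel false (wQ Q) (wQ (form_act Q a b c d)).
Proof.
  remember (Z.abs_nat c) as n eqn:Hn. revert Q a b c d Hn.
  induction n as [n IH] using lt_wf_ind. intros Q a b c d Hn HQ Hdet.
  destruct (Z.eq_dec c 0) as [->|Hc].
  - rewrite Z.mul_0_r, Z.sub_0_r in Hdet.
    assert (Hb : form_act Q a b 0 d = form_act Q 1 (a * b) 0 1).
    { destruct (Z.eq_mul_1 _ _ Hdet) as [-> | ->];
        [replace d with 1%Z by lia|replace d with (-1)%Z by lia];
        unfold form_act; f_equal; ring. }
    rewrite Hb, wQ_form_act_translate by exact HQ. apply cf_tail_rel_sub_int, wQ_not_int, HQ.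
  - set (q := (a / c)%Z). set (r := (a mod c)%Z).
    assert (Ha : a = (c * q + r)%Z) by (apply Z.div_mod; exact Hc).
    assert (Hr : (Z.abs r < Z.abs c)%Z).
    { destruct (Z.lt_ge_cases 0 c).
      - pose proof (Z.mod_pos_bound a c H). unfold r. lia.
      - pose proof (Z.mod_neg_bound a c ltac:(lia)). unfold r. lia. }
    set (Q1 := form_act Q 1 q 0 1). set (Q2 := form_act Q1 0 1 (-1) 0).
    assert (HQ1 : in_Qplus Q1) by (apply in_Qplus_form_act; [lia|exact HQ]).
    assert (HQ2 : in_Qplus Q2) by (apply in_Qplus_form_act; [lia|exact HQ1]).
    assert (Edec : form_act Q a b c d = form_act Q2 (- c) (- d) r (b - q * d)).
    { unfold Q2, Q1. rewrite !form_act_comp, Ha. f_equal; ring. }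
    assert (R1 : cf_tail_rel false (wQ Q) (wQ Q1)).
    { unfold Q1. rewrite wQ_form_act_translate by exact HQ.
      apply cf_tail_rel_sub_int, wQ_not_int, HQ. }
    assert (R2 : cf_tail_rel false (wQ Q1) (wQ Q2)).
    { unfold Q2. rewrite wQ_form_act_S by exact HQ1. apply cf_tail_rel_opp_inv.
      - exact (wQ_not_int Q1 HQ1 0).
      - apply cf_infinite_wQ, HQ1.
      - rewrite <- wQ_form_act_S by exact HQ1. apply cf_infinite_wQ, HQ2. }
    assert (R3 : cf_tail_rel false (wQ Q2) (wQ (form_act Q2 (- c) (- d) r (b - q * d)))).
    { apply (IH (Z.abs_nat r)); [lia|reflexivity|exact HQ2|rewrite Ha in Hdet; lia]. }
    rewrite Edec. exact (cf_tail_rel_trans _ _ _ _ _ (cf_tail_rel_trans _ _ _ _ _ R1 R2) R3).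
Qed.

Lemma cf_eval_fixed_point (c : list Z) (x : R) : c <> [] -> all_posZ c -> 1 < x ->
  cf_eval c x = x ->
  cf_infinite x /\ periodic (cf_digit x) (length c) /\
  (forall j, (j < length c)%nat -> cf_digit x j = nth j c 0%Z).
Proof.
  intros Hc Pc X1 Fix.
  destruct (cf_rem_cf_eval c x X1 Pc) as [Hb Hl]. rewrite Fix in Hb, Hl.
  set (M := length c) in *.
  assert (HM : (0 < M)%nat) by (unfold M; destruct c; [contradiction|cbn; lia]).
  assert (Per : periodic (cf_rem x) M).
  { intros n. rewrite Nat.add_comm, cf_rem_add, Hl. reflexivity. }
  assert (Red : forall n, cf_rem x n = cf_rem x (n mod M))
    by (intros n; apply periodic_mod; assumption).
  split; [|split].
  - intros n z E. rewrite Red in E.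
    destruct (Hb _ (Nat.mod_upper_bound n M ltac:(lia))) as [B1 B2]. rewrite E in B1, B2.
    rewrite <- plus_IZR in B2. apply lt_IZR in B1. apply lt_IZR in B2. lia.
  - intros n. unfold cf_digit. rewrite Per. reflexivity.
  - intros j Hj. unfold cf_digit. destruct (Hb j Hj). apply Int_part_eq. lra.
Qed.

(* The entries [(p, p', q, q')] of the matrix product of the [[a, 1], [1, 0]], a in l. *)
Fixpoint cf_mat (l : list Z) : Z * Z * Z * Z :=
  match l with
  | [] => (1, 0, 0, 1)%Z
  | a :: r => let '(p, p', q, q') := cf_mat r in (a * p + q, a * p' + q', p, p')%Z
  end.

Lemma cf_eval_cf_mat (l : list Z) (p p' q q' : Z) : cf_mat l = (p, p', q, q') -> all_posZ l ->
  (0 <= p /\ 0 <= p' /\ 0 <= q /\ 0 <= q')%Z /\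
  forall t, 0 < t -> 0 < IZR p * t + IZR p' /\ 0 < IZR q * t + IZR q' /\
    cf_eval l t = (IZR p * t + IZR p') / (IZR q * t + IZR q').
Proof.
  revert p p' q q'; induction l as [|a r IH]; intros p p' q q' E P.
  - injection E as <- <- <- <-. split; [lia|]. intros t Ht. cbn. repeat split; [lra|lra|field].
  - cbn in E. destruct (cf_mat r) as [[[p0 p0'] q0] q0'].
    injection E as <- <- <- <-. inversion P as [|? ? Pa Pr]; subst.
    destruct (IH p0 p0' q0 q0' eq_refl Pr) as [B H]. split; [nia|].
    intros t Ht. destruct (H t Ht) as (H1 & H2 & H3). apply IZR_le in Pa.
    assert (0 <= IZR p0 * t) by (apply Rmult_le_pos; [apply IZR_le; lia|lra]).
    rewrite !plus_IZR, !mult_IZR. repeat split; [nra|exact H1|].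
    cbn. rewrite H3. field. lra.
Qed.

Lemma cf_mat_pos (l : list Z) (p p' q q' : Z) : cf_mat l = (p, p', q, q') -> all_posZ l ->
  l <> [] -> (1 <= p /\ 1 <= p' /\ 1 <= q)%Z.
Proof.
  revert p p' q q'; induction l as [|a r IH]; intros p p' q q' E P H; [contradiction|].
  cbn in E. destruct (cf_mat r) as [[[p0 p0'] q0] q0'] eqn:Er.
  injection E as <- <- <- <-. inversion P as [|? ? Pa Pr]; subst.
  destruct (cf_eval_cf_mat r p0 p0' q0 q0' Er Pr) as [B _].
  destruct r as [|b r'].
  - injection Er as <- <- <- <-. lia.
  - destruct (IH p0 p0' q0 q0' eq_refl Pr ltac:(discriminate)). nia.
Qed.

(* [cf_eval c x = x] becomes [q x^2 + (q' - p) x - p' = 0]. *)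
Definition cycle_form (c : list Z) : form :=
  let '(p, p', q, q') := cf_mat c in mkForm q (q' - p) (- p').

Lemma cycle_form_fixed_point (c : list Z) : c <> [] -> all_posZ c ->
  (0 < fa (cycle_form c))%Z /\ (0 < disc (cycle_form c))%Z /\
  1 < wQ (cycle_form c) /\ cf_eval c (wQ (cycle_form c)) = wQ (cycle_form c).
Proof.
  intros Hc Pc. unfold cycle_form.
  destruct (cf_mat c) as [[[p p'] q] q'] eqn:Em.
  destruct (cf_eval_cf_mat c p p' q q' Em Pc) as [Bnd Hev].
  destruct (cf_mat_pos c p p' q q' Em Pc Hc) as (Hp & Hp' & Hq).
  set (Qf := mkForm q (q' - p) (- p')).
  assert (HD : disc Qf = ((q' - p) * (q' - p) + 4 * q * p')%Z) by (unfold disc; cbn; ring).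
  assert (HD0 : (0 < disc Qf)%Z) by (rewrite HD; pose proof (Z.square_nonneg (q' - p)); nia).
  set (s := sqrt (IZR (disc Qf))).
  assert (Hs2 : s * s = IZR ((q' - p) * (q' - p) + 4 * q * p'))
    by (rewrite <- HD; apply sqrt_sqrt, IZR_le; lia).
  rewrite plus_IZR, !mult_IZR in Hs2.
  assert (Hs0 : 0 <= s) by apply sqrt_pos.
  set (x := wQ Qf).
  assert (Ex : x = (- IZR (q' - p) + s) / (2 * IZR q)) by reflexivity.
  assert (Qr : 0 < IZR q) by (apply IZR_lt; lia).
  assert (Pr : 0 < IZR q * IZR p') by (apply Rmult_lt_0_compat; [lra|apply IZR_lt; lia]).
  assert (Root : IZR q * x * x + IZR (q' - p) * x - IZR p' = 0).
  { rewrite Ex. field_simplify_eq; [|lra]. replace (s ^ 2) with (s * s) by ring. rewrite Hs2.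
    ring. }
  assert (Xpos : 0 < x).
  { rewrite Ex. apply Rdiv_lt_0_compat; [|lra].
    destruct (Rlt_or_le (IZR (q' - p)) 0) as [H|H]; [lra|].
    destruct (Rlt_or_le (IZR (q' - p)) s) as [Hlt|Hle]; [lra|].
    assert (s * s <= IZR (q' - p) * IZR (q' - p)) by (apply Rmult_le_compat; lra). lra. }
  assert (Fix : cf_eval c x = x).
  { destruct (Hev x Xpos) as (H1 & H2 & ->). field_simplify_eq; [|lra].
    rewrite minus_IZR in Root. nra. }
  split; [cbn; lia|]. split; [exact HD0|]. split; [|exact Fix].
  rewrite <- Fix. destruct c as [|a r]; [contradiction|]. apply cf_eval_cons_gt1; assumption.
Qed.

Lemma in_Qplus_of_cf_infinite (f : form) : (0 < fa f)%Z -> (0 < disc f)%Z ->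
  cf_infinite (wQ f) -> in_Qplus f.
Proof.
  intros Ha HD Nx. split; [exact HD|]. intros (z & Hz).
  apply (cf_infinite_irrational _ Nx (- fb f + Z.abs z) (2 * fa f)); [lia|].
  unfold wQ. rewrite <- Hz, mult_IZR, <- Rsqr_def, sqrt_Rsqr_abs, <- abs_IZR.
  rewrite plus_IZR, opp_IZR, mult_IZR. reflexivity.
Qed.

Lemma cycle_form_digits (c : list Z) : c <> [] -> all_posZ c ->
  in_Qplus (cycle_form c) /\
  periodic (cf_digit (wQ (cycle_form c))) (length c) /\
  (forall j, (j < length c)%nat -> cf_digit (wQ (cycle_form c)) j = nth j c 0%Z).
Proof.
  intros Hc Pc. destruct (cycle_form_fixed_point c Hc Pc) as (Ha & HD & X1 & Fix).
  destruct (cf_eval_fixed_point c _ Hc Pc X1 Fix) as (Nx & Hper & Hnth).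
  split; [exact (in_Qplus_of_cf_infinite _ Ha HD Nx)|]. split; assumption.
Qed.

Local Close Scope R_scope.

(** * The map W *)

Lemma length_alt_word_ge (b : bool) (c : list nat) : all_pos c ->
  (length c <= length (alt_word b c))%nat.
Proof.
  intros Hc. revert b. induction Hc as [|x r Hx Hr IH]; intros b; [reflexivity|].
  cbn [alt_word]. rewrite length_app, repeat_length. cbn [length]. specialize (IH (negb b)). lia.
Qed.

Lemma cyc_equiv_length (u v : list LR) : cyc_equiv u v -> length v = length u.
Proof.
  intros (i & ->). rewrite length_app, length_skipn, length_firstn.
  destruct (Nat.le_gt_cases i (length u)); lia.
Qed.

Lemma W_relE (Q : form) (w : list LR) :
  W_rel Q w <-> exists k m, min_period (cf_digit (wQ Q)) m /\
    periodic_from (cf_digit (wQ Q)) (2 * k) m /\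
    w = word_of (map Z.to_nat (period_block (cf_digit (wQ Q)) k m)).
Proof.
  split.
  - intros (k & c & (m & Hm & Pm & ->) & ->). exists k, m. auto.
  - intros (k & m & Hm & Pm & ->). exists k, (period_block (cf_digit (wQ Q)) k m).
    split; [exists m|]; auto.
Qed.

Section Digits.

Variable Q : form.
Hypothesis HQ : in_Qplus Q.
Local Notation d := (cf_digit (wQ Q)).

Lemma cf_digit_ge1_period (k m : nat) : periodic_from d (2 * k) m ->
  forall t, (1 <= d (2 * k + t)%nat)%Z.
Proof.
  intros [Hm P] t.
  destruct (2 * k + t)%nat as [|n] eqn:E; [|apply cf_digit_ge1, cf_infinite_wQ, HQ].
  assert (k = 0 /\ t = 0)%nat as [-> ->] by lia.
  rewrite <- (P 0%nat) by lia. destruct m; [lia|]. apply cf_digit_ge1, cf_infinite_wQ, HQ.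
Qed.

Lemma period_block_all_pos (k m : nat) : periodic_from d (2 * k) m ->
  all_pos (map Z.to_nat (period_block d k m)) /\
  Nat.even (length (map Z.to_nat (period_block d k m))) = true /\
  (2 <= length (map Z.to_nat (period_block d k m)))%nat.
Proof.
  intros Pm. rewrite length_map, length_period_block. split; [|split].
  - unfold period_block. rewrite map_map. apply Forall_forall. intros x (t & <- & _)%in_map_iff.
    pose proof (cf_digit_ge1_period k m Pm t). lia.
  - apply even_even_period.
  - destruct (even_period_spec m) as [h Hh]. pose proof (even_period_ge m). destruct Pm. lia.
Qed.

Lemma W_rel_exists : exists w, W_rel Q w.
Proof.
  destruct (min_period_exists d (cf_digit_wQ_eventually_periodic Q HQ)) as [m Hm].
  pose proof Hm as [(N & PN) _].
  eexists. apply W_relE. exists N, m. split; [exact Hm|].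
  split; [apply (periodic_from_le d N); [exact PN|lia]|reflexivity].
Qed.

Lemma W_rel_primitive (w : list LR) : W_rel Q w -> primitive_word w.
Proof.
  intros (k & m & Hm & Pm & ->)%W_relE. rewrite word_ofE.
  destruct (period_block_all_pos k m Pm) as (Pc & Ev & L2).
  set (cn := map Z.to_nat (period_block d k m)) in *.
  assert (Hne : cn <> []) by (intros E; rewrite E in L2; cbn in L2; lia).
  split; [intros E; exact (Hne (alt_word_nil false cn Pc E))|].
  intros U q Hq E.
  destruct (alt_word_eq_lpow cn U q Pc Ev Hne Hq E) as (c1 & c2 & H1 & H2 & Ev1 & E1 & E2).
  assert (Hd : forall t, (0 <= d (2 * k + t)%nat)%Z)
    by (intros t; pose proof (cf_digit_ge1_period k m Pm t); lia).
  destruct (period_block_swap_trivial d k m c1 c2 Hm Pm Hd E1 (eq_trans (eq_sym E1) E2) Ev1);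
    contradiction.
Qed.

Lemma W_rel_not_single_letter (w : list LR) : W_rel Q w ->
  ~ cyc_equiv w [L_] /\ ~ cyc_equiv w [R_].
Proof.
  intros (k & m & Hm & Pm & ->)%W_relE. rewrite word_ofE.
  destruct (period_block_all_pos k m Pm) as (Pc & _ & L2).
  assert (HL := length_alt_word_ge false _ Pc).
  split; intros Hc%cyc_equiv_length; cbn in Hc; lia.
Qed.

End Digits.

Lemma W_rel_SL2_invariant (Q Q' : form) (w w' : list LR) :
  in_Qplus Q -> SL2_equiv Q Q' -> W_rel Q w -> W_rel Q' w' -> cyc_equiv w w'.
Proof.
  intros HQ (a & b & c & d & Hdet & ->)
    (k & m & Hm & Pm & ->)%W_relE (k' & m' & Hm' & Pm' & ->)%W_relE.
  destruct (cf_tail_rel_wQ_form_act Q a b c d HQ Hdet) as (i & j & Hij & E).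
  destruct (period_block_rotate _ _ k k' m m' i j Hm Pm Hm' Pm' (Bool.xorb_eq _ _ Hij))
    as (u & v & Eu & Ev & -> & ->).
  { intros n. unfold cf_digit. rewrite !cf_rem_add, E. reflexivity. }
  rewrite !map_app, !word_ofE, !alt_word_app_even by (rewrite length_map; assumption).
  apply cyc_equiv_swap.
Qed.

Lemma W_rel_surj (u : list LR) : primitive_word u -> ~ cyc_equiv u [L_] -> ~ cyc_equiv u [R_] ->
  exists (Q : form) (w : list LR), in_Qplus Q /\ W_rel Q w /\ cyc_equiv w u.
Proof.
  intros Hu HL HR.
  destruct (primitive_rotate_LR u Hu HL HR) as (A & B & -> & (t & Ht) & He).
  assert (Hs : not_led_by R_ (B ++ A)) by (intros t' E; rewrite Ht in E; discriminate E).
  destruct (alt_word_surj (B ++ A) Hs He) as (cn & Pcn & Ecn & Wcn).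
  set (c := map Z.of_nat cn).
  assert (Pc : all_posZ c).
  { apply Forall_map. refine (Forall_impl _ _ Pcn). intros x Hx. lia. }
  assert (Hc : c <> []).
  { intros E%map_eq_nil. subst cn. rewrite Ht in Wcn. discriminate Wcn. }
  assert (Hcn : map Z.to_nat c = cn).
  { unfold c. rewrite map_map. erewrite map_ext; [apply map_id|]. intros x. apply Nat2Z.id. }
  destruct (cycle_form_digits c Hc Pc) as (HQ & Hper & Hnth).
  set (d := cf_digit (wQ (cycle_form c))) in *.
  assert (Evc : Nat.even (length c) = true) by (unfold c; rewrite length_map; exact Ecn).
  assert (HM : (0 < length c)%nat).
  { destruct (length c) eqn:E; [apply length_zero_iff_nil in E; contradiction|lia]. }
  destruct (min_period_exists d
              (ex_intro _ 0%nat (ex_intro _ (length c) (conj HM (fun n _ => Hper n)))))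
    as [m Hm].
  destruct (period_block_root d c m Hc Evc Hper Hnth Hm) as (P0 & q & Hq).
  exists (cycle_form c), (word_of (map Z.to_nat (period_block d 0 m))).
  split; [exact HQ|]. split; [apply W_relE; exists 0%nat, m; auto|].
  rewrite word_ofE.
  assert (Ew : B ++ A = lpow (alt_word false (map Z.to_nat (period_block d 0 m))) q).
  { rewrite <- Wcn, <- Hcn, Hq, map_lpow, alt_word_lpow; [reflexivity|].
    rewrite length_map, length_period_block. apply even_even_period. }
  destruct q as [|[|q]].
  - rewrite Ht in Ew. discriminate Ew.
  - unfold lpow in Ew. cbn in Ew. rewrite app_nil_r in Ew. rewrite <- Ew. apply cyc_equiv_swap.
  - exfalso. exact (primitive_swap A B _ (S (S q)) Hu ltac:(lia) Ew).
Qed.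

Theorem lemma2p4 :
  (* W(Q) is defined for every Q in Q_+ *)
  (forall Q : form, in_Qplus Q -> exists w, W_rel Q w) /\
  (* independent of the choices and of the SL_2(Z)-representative, up to ~ *)
  (forall (Q Q' : form) (w w' : list LR),
      in_Qplus Q -> SL2_equiv Q Q' -> W_rel Q w -> W_rel Q' w' -> cyc_equiv w w') /\
  (* its values are primitive words *)
  (forall (Q : form) (w : list LR), in_Qplus Q -> W_rel Q w -> primitive_word w) /\
  (* the image avoids the classes of L and R *)
  (forall (Q : form) (w : list LR), in_Qplus Q -> W_rel Q w ->
      ~ cyc_equiv w [L_] /\ ~ cyc_equiv w [R_]) /\
  (* every other primitive class is attained *)
  (forall u : list LR, primitive_word u -> ~ cyc_equiv u [L_] -> ~ cyc_equiv u [R_] ->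
      exists (Q : form) (w : list LR), in_Qplus Q /\ W_rel Q w /\ cyc_equiv w u).
Proof.
  split; [exact W_rel_exists|].
  split; [exact W_rel_SL2_invariant|].
  split; [intros Q w HQ; exact (W_rel_primitive Q HQ w)|].
  split; [intros Q w HQ; exact (W_rel_not_single_letter Q HQ w)|].
  exact W_rel_surj.
Qed.
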